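(* Let $0<a<b$, $I=[-b,-a]\cup[a,b]$, and let $f$ be a real-valued continuous function on $I$ such that $f|_{[-b,-a]}$ is the restriction of a function $f_1$ analytic in the half plane $\mathrm{Re}\,z<0$ and $f|_{[a,b]}$ is the restriction of a function $f_2$ analytic in the half plane $\mathrm{Re}\,z>0$. Then for every $\xi$ with $1<\xi<\bar\xi:=\frac{b+a}{b-a}$ there is a constant $C>0$ independent of $k$ such that $$E_k(f,I)\le C\,\xi^{-k/2}\quad\text{for all } k\ge0.$$
   Context: For a compact set $J\subset\mathbb R$ and real-valued continuous $f$ on $J$, $E_k(f,J)=\inf\{\max_{x\in J}|f(x)-p(x)|: p \text{ a polynomial with real coefficients of degree}\le k\}$. *)

From Stdlib Require Import Reals Lra.
Open Scope R_scope.

Definition Cplx : Type := (R * R)%type.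
Definition Cre (z : Cplx) : R := fst z.
Definition Cim (z : Cplx) : R := snd z.
Definition RtoC (x : R) : Cplx := (x, 0).
Definition Cadd (z w : Cplx) : Cplx := (fst z + fst w, snd z + snd w).
Definition Csub (z w : Cplx) : Cplx := (fst z - fst w, snd z - snd w).
Definition Cmul (z w : Cplx) : Cplx :=
  (fst z * fst w - snd z * snd w, fst z * snd w + snd z * fst w).
Fixpoint Cpow (z : Cplx) (n : nat) : Cplx :=
  match n with O => (1, 0) | S m => Cmul z (Cpow z m) end.
Definition Cmod (z : Cplx) : R := sqrt (fst z * fst z + snd z * snd z).

Fixpoint Csum (u : nat -> Cplx) (N : nat) : Cplx :=
  match N with O => u O | S M => Cadd (Csum u M) (u (S M)) end.

Definition Cseries_cv (u : nat -> Cplx) (l : Cplx) : Prop :=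
  Un_cv (fun N => fst (Csum u N)) (fst l) /\ Un_cv (fun N => snd (Csum u N)) (snd l).

Definition analytic_on (U : Cplx -> Prop) (g : Cplx -> Cplx) : Prop :=
  forall z0, U z0 ->
    exists r, 0 < r /\ exists c : nat -> Cplx,
      forall z, Cmod (Csub z z0) < r ->
        Cseries_cv (fun n => Cmul (c n) (Cpow (Csub z z0) n)) (g z).

Definition poly_eval (c : nat -> R) (k : nat) (x : R) : R :=
  sum_f_R0 (fun i => c i * x ^ i) k.

Definition sup_err (f p : R -> R) (J : R -> Prop) (s : R) : Prop :=
  is_lub (fun e => exists x, J x /\ e = Rabs (f x - p x)) s.

(** E_k(f,J) <= M, i.e. inf { max_J |f - p| : deg p <= k } <= M, unfolded:
    for every eps > 0 some p of degree <= k has max_J |f - p| <= M + eps. *)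
Definition Ek_le (f : R -> R) (J : R -> Prop) (k : nat) (M : R) : Prop :=
  forall eps, 0 < eps ->
    exists c : nat -> R, exists s,
      sup_err f (poly_eval c k) J s /\ s <= M + eps.

Definition continuous_on (f : R -> R) (J : R -> Prop) : Prop :=
  forall x, J x -> limit1_in f J (f x) x.

(** The map [s(x) = (2x^2 - a^2 - b^2)/(b^2 - a^2)] sends [I] onto
    [[-1,1]]; [Q = T_n o s] ([T_n] the Chebyshev polynomial) has degree [2n],
    [|Q| <= 1] on [I], and [|Q| >= kappa xi^n] on a contour made of two
    rectangles surrounding [[-b,-a]] and [[a,b]] inside the two half-planes.
    By Cauchy's formula on that contour,
      f(x) = 1/(2 pi i) [ int f(w)(Q(w)-Q(x))/((w-x)Q(w)) dw + Q(x) int f(w)/((w-x)Q(w)) dw ],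
    where the first integral is a polynomial of degree [2n-1] in [x] and the
    second is [O(xi^-n)].  Taking [n = (k+1)/2] gives the bound. *)

From Pilot Require Import Defs.
From Stdlib Require Import Reals Lra Lia Psatz.
From Coquelicot Require Import Coquelicot.
Open Scope R_scope.

Lemma Cmod_im_le (z : C) : Rabs (snd z) <= Cmod z.
Proof.
  unfold Cmod. rewrite <- sqrt_Rsqr_abs. apply sqrt_le_1_alt.
  unfold Rsqr; simpl; nra.
Qed.

Lemma Cmod_le_abs_sum (z : C) : Cmod z <= Rabs (fst z) + Rabs (snd z).
Proof.
  pose proof (Rabs_pos (fst z)); pose proof (Rabs_pos (snd z)).
  unfold Cmod. rewrite <- (sqrt_Rsqr (Rabs (fst z) + Rabs (snd z))) by lra.
  apply sqrt_le_1_alt.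
  pose proof (Rsqr_abs (fst z)); pose proof (Rsqr_abs (snd z)); unfold Rsqr in *. nra.
Qed.

Lemma Cmod_sub_sym (z w : C) : Cmod (z - w) = Cmod (w - z).
Proof. rewrite <- Cmod_opp. f_equal. ring. Qed.

Lemma Cmod_reverse_triangle (z w : C) : Cmod z - Cmod w <= Cmod (z - w).
Proof.
  replace z with ((z - w) + w)%C at 1 by ring.
  pose proof (Cmod_triangle (z - w) w). lra.
Qed.

Lemma Cmod_triangle3 (u v w : C) : Cmod (u + v + w) <= Cmod u + Cmod v + Cmod w.
Proof. pose proof (Cmod_triangle (u + v) w); pose proof (Cmod_triangle u v); lra. Qed.

Lemma C_proj_eq (z w : C) : fst z = fst w -> snd z = snd w -> z = w.
Proof. destruct z, w; simpl; intros; subst; auto. Qed.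

(** * Continuity and Caratheodory differentiability of complex functions

    This form is closed under the field
    operations with one-line proofs and is exactly what Goursat's argument uses. *)

Definition Ccont_at (g : C -> C) (p : C) : Prop :=
  forall eps, 0 < eps -> exists del, 0 < del /\
    forall w, Cmod (w - p) < del -> Cmod (g w - g p) < eps.

Definition Cdiff_at (g : C -> C) (p : C) : Prop :=
  exists r, 0 < r /\ exists phi, Ccont_at phi p /\
    forall w, Cmod (w - p) < r -> g w = (g p + phi w * (w - p))%C.

Lemma Ccont_at_const (c p : C) : Ccont_at (fun _ => c) p.
Proof.
  intros e He; exists 1; split; [lra|]. intros w _.
  replace (c - c)%C with (RtoC 0) by ring. rewrite Cmod_0; auto.
Qed.

Lemma Ccont_at_id (p : C) : Ccont_at (fun w => w) p.
Proof. intros e He; exists e; split; auto. Qed.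

Lemma Ccont_at_plus g h p :
  Ccont_at g p -> Ccont_at h p -> Ccont_at (fun w => g w + h w)%C p.
Proof.
  intros Hg Hh e He.
  destruct (Hg (e/2)) as [d1 [Hd1 H1]]; [lra|].
  destruct (Hh (e/2)) as [d2 [Hd2 H2]]; [lra|].
  exists (Rmin d1 d2); split; [apply Rmin_pos; auto|]. intros w Hw.
  specialize (H1 w (Rlt_le_trans _ _ _ Hw (Rmin_l _ _))).
  specialize (H2 w (Rlt_le_trans _ _ _ Hw (Rmin_r _ _))).
  replace (g w + h w - (g p + h p))%C with ((g w - g p) + (h w - h p))%C by ring.
  pose proof (Cmod_triangle (g w - g p) (h w - h p)). lra.
Qed.

Lemma Ccont_at_opp g p : Ccont_at g p -> Ccont_at (fun w => - g w)%C p.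
Proof.
  intros Hg e He. destruct (Hg e He) as [d [Hd H]]. exists d; split; auto.
  intros w Hw. replace (- g w - - g p)%C with (- (g w - g p))%C by ring.
  rewrite Cmod_opp; auto.
Qed.

Lemma Ccont_at_minus g h p :
  Ccont_at g p -> Ccont_at h p -> Ccont_at (fun w => g w - h w)%C p.
Proof. intros; apply Ccont_at_plus; auto; apply Ccont_at_opp; auto. Qed.

Lemma Ccont_at_mult g h p :
  Ccont_at g p -> Ccont_at h p -> Ccont_at (fun w => g w * h w)%C p.
Proof.
  intros Hg Hh e He.
  set (A := Cmod (g p)). set (B := Cmod (h p)).
  assert (HA : 0 <= A) by apply Cmod_ge_0. assert (HB : 0 <= B) by apply Cmod_ge_0.
  destruct (Hg (e / (4 * (B + 1)))) as [d1 [Hd1 H1]].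
  { apply Rdiv_lt_0_compat; lra. }
  destruct (Hh (Rmin 1 (e / (4 * (A + 1))))) as [d2 [Hd2 H2]].
  { apply Rmin_pos; [lra|]. apply Rdiv_lt_0_compat; lra. }
  exists (Rmin d1 d2); split; [apply Rmin_pos; auto|]. intros w Hw.
  specialize (H1 w (Rlt_le_trans _ _ _ Hw (Rmin_l _ _))).
  specialize (H2 w (Rlt_le_trans _ _ _ Hw (Rmin_r _ _))).
  pose proof (Rlt_le_trans _ _ _ H2 (Rmin_l _ _)) as H2a.
  pose proof (Rlt_le_trans _ _ _ H2 (Rmin_r _ _)) as H2b.
  replace (g w * h w - g p * h p)%C with ((g w - g p) * h w + g p * (h w - h p))%C by ring.
  eapply Rle_lt_trans; [apply Cmod_triangle|]. rewrite !Cmod_mult.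
  assert (Hhw : Cmod (h w) <= B + 1).
  { replace (h w) with ((h w - h p) + h p)%C by ring.
    pose proof (Cmod_triangle (h w - h p) (h p)) as T. fold B in T. lra. }
  assert (E1 : Cmod (g w - g p) * Cmod (h w) <= e / (4 * (B + 1)) * (B + 1))
    by (apply Rmult_le_compat; try apply Cmod_ge_0; lra).
  assert (E2 : A * Cmod (h w - h p) <= (A + 1) * (e / (4 * (A + 1))))
    by (apply Rmult_le_compat; try apply Cmod_ge_0; lra).
  replace (e / (4 * (B + 1)) * (B + 1)) with (e/4) in E1 by (field; lra).
  replace ((A + 1) * (e / (4 * (A + 1)))) with (e/4) in E2 by (field; lra).
  fold A. lra.
Qed.

Lemma Ccont_at_inv g p : Ccont_at g p -> g p <> 0%C -> Ccont_at (fun w => / g w)%C p.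
Proof.
  intros Hg Hp e He.
  set (A := Cmod (g p)). assert (HA : 0 < A) by (apply Cmod_gt_0; auto).
  assert (HeA : 0 < e * A * A / 2) by (apply Rdiv_lt_0_compat; [|lra]; apply Rmult_lt_0_compat; nra).
  destruct (Hg (Rmin (A/2) (e * A * A / 2))) as [d [Hd H]]; [apply Rmin_pos; lra|].
  exists d; split; auto. intros w Hw. specialize (H w Hw).
  pose proof (Rlt_le_trans _ _ _ H (Rmin_l _ _)) as H1.
  pose proof (Rlt_le_trans _ _ _ H (Rmin_r _ _)) as H2.
  assert (Hgw : A / 2 <= Cmod (g w)).
  { pose proof (Cmod_reverse_triangle (g p) (g w)). rewrite Cmod_sub_sym in H0. fold A in H0. lra. }
  assert (gw0 : g w <> 0%C) by (apply Cmod_gt_0; lra).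
  replace (/ g w - / g p)%C with (- (g w - g p) / (g w * g p))%C by (field; auto).
  rewrite Cmod_div, Cmod_opp, Cmod_mult by (apply Cmult_neq_0; auto). fold A.
  apply Rlt_le_trans with ((e * A * A / 2) / (Cmod (g w) * A)).
  - apply Rmult_lt_compat_r; auto. apply Rinv_0_lt_compat, Rmult_lt_0_compat; lra.
  - apply Rle_trans with ((e * A * A / 2) / (A/2 * A)).
    + apply Rmult_le_compat_l; [lra|]. apply Rinv_le_contravar; [nra|]. apply Rmult_le_compat_r; lra.
    + right. field. lra.
Qed.

Lemma Ccont_at_local g h p r : 0 < r -> (forall w, Cmod (w - p) < r -> g w = h w) ->
  Ccont_at h p -> Ccont_at g p.
Proof.
  intros Hr Heq Hh e He. destruct (Hh e He) as [d [Hd H]].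
  exists (Rmin d r); split; [apply Rmin_pos; auto|]. intros w Hw.
  assert (Hp : Cmod (p - p) < r) by (replace (p - p)%C with (RtoC 0) by ring; rewrite Cmod_0; lra).
  rewrite (Heq p) by auto. rewrite (Heq w) by (eapply Rlt_le_trans; [apply Hw|apply Rmin_r]).
  apply H. eapply Rlt_le_trans; [apply Hw|apply Rmin_l].
Qed.

Lemma Ccont_at_Csum (h : nat -> C -> C) m p :
  (forall i, Ccont_at (h i) p) -> Ccont_at (fun w => Csum (fun i => h i w) m) p.
Proof. intros H. induction m as [|m IH]; [apply H|]. apply Ccont_at_plus; auto. Qed.

Lemma Cdiff_at_cont g p : Cdiff_at g p -> Ccont_at g p.
Proof.
  intros [r [Hr [phi [Hphi Heq]]]].
  apply Ccont_at_local with (h := fun w => (g p + phi w * (w - p))%C) (r := r); auto.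
  apply Ccont_at_plus; [apply Ccont_at_const|]. apply Ccont_at_mult; auto.
  apply Ccont_at_minus; [apply Ccont_at_id|apply Ccont_at_const].
Qed.

Lemma Cdiff_at_local g h p r : 0 < r -> (forall w, Cmod (w - p) < r -> g w = h w) ->
  Cdiff_at h p -> Cdiff_at g p.
Proof.
  intros Hr Heq [r' [Hr' [phi [Hphi H]]]].
  exists (Rmin r r'); split; [apply Rmin_pos; auto|]. exists phi; split; auto. intros w Hw.
  assert (Hp : Cmod (p - p) < r) by (replace (p - p)%C with (RtoC 0) by ring; rewrite Cmod_0; lra).
  rewrite (Heq p) by auto. rewrite (Heq w) by (eapply Rlt_le_trans; [apply Hw|apply Rmin_l]).
  apply H. eapply Rlt_le_trans; [apply Hw|apply Rmin_r].
Qed.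

Lemma Cdiff_at_const c p : Cdiff_at (fun _ => c) p.
Proof. exists 1; split; [lra|]. exists (fun _ => 0%C); split; [apply Ccont_at_const|]. intros; ring. Qed.

Lemma Cdiff_at_id p : Cdiff_at (fun w => w) p.
Proof. exists 1; split; [lra|]. exists (fun _ => 1%C); split; [apply Ccont_at_const|]. intros; ring. Qed.

Lemma Cdiff_at_plus g h p : Cdiff_at g p -> Cdiff_at h p -> Cdiff_at (fun w => g w + h w)%C p.
Proof.
  intros [r1 [Hr1 [phi1 [Hphi1 H1]]]] [r2 [Hr2 [phi2 [Hphi2 H2]]]].
  exists (Rmin r1 r2); split; [apply Rmin_pos; auto|].
  exists (fun w => phi1 w + phi2 w)%C; split; [apply Ccont_at_plus; auto|].
  intros w Hw. rewrite H1, H2.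
  - ring.
  - eapply Rlt_le_trans; [apply Hw|apply Rmin_r].
  - eapply Rlt_le_trans; [apply Hw|apply Rmin_l].
Qed.

Lemma Cdiff_at_opp g p : Cdiff_at g p -> Cdiff_at (fun w => - g w)%C p.
Proof.
  intros [r [Hr [phi [Hphi H]]]]. exists r; split; auto.
  exists (fun w => - phi w)%C; split; [apply Ccont_at_opp; auto|].
  intros w Hw. rewrite H by auto. ring.
Qed.

Lemma Cdiff_at_minus g h p : Cdiff_at g p -> Cdiff_at h p -> Cdiff_at (fun w => g w - h w)%C p.
Proof. intros; apply Cdiff_at_plus; auto; apply Cdiff_at_opp; auto. Qed.

Lemma Cdiff_at_mult g h p : Cdiff_at g p -> Cdiff_at h p -> Cdiff_at (fun w => g w * h w)%C p.
Proof.
  intros Hg Hh. pose proof (Cdiff_at_cont _ _ Hh) as Hch.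
  destruct Hg as [r1 [Hr1 [phi1 [Hphi1 H1]]]]. destruct Hh as [r2 [Hr2 [phi2 [Hphi2 H2]]]].
  exists (Rmin r1 r2); split; [apply Rmin_pos; auto|].
  exists (fun w => phi1 w * h w + g p * phi2 w)%C; split.
  { apply Ccont_at_plus; apply Ccont_at_mult; auto. apply Ccont_at_const. }
  intros w Hw.
  specialize (H1 w (Rlt_le_trans _ _ _ Hw (Rmin_l _ _))).
  specialize (H2 w (Rlt_le_trans _ _ _ Hw (Rmin_r _ _))).
  rewrite H1. replace (h p) with (h w - phi2 w * (w - p))%C by (rewrite H2; ring). ring.
Qed.

Lemma Cdiff_at_inv g p : Cdiff_at g p -> g p <> 0%C -> Cdiff_at (fun w => / g w)%C p.
Proof.
  intros Hg Hp. pose proof (Cdiff_at_cont _ _ Hg) as Hc.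
  destruct Hg as [r [Hr [phi [Hphi H]]]].
  destruct (Hc (Cmod (g p))) as [d [Hd Hd']]; [apply Cmod_gt_0; auto|].
  exists (Rmin r d); split; [apply Rmin_pos; auto|].
  exists (fun w => - phi w * / (g w * g p))%C; split.
  { apply Ccont_at_mult; [apply Ccont_at_opp; auto|]. apply Ccont_at_inv.
    - apply Ccont_at_mult; auto. apply Ccont_at_const.
    - apply Cmult_neq_0; auto. }
  intros w Hw.
  specialize (H w (Rlt_le_trans _ _ _ Hw (Rmin_l _ _))).
  specialize (Hd' w (Rlt_le_trans _ _ _ Hw (Rmin_r _ _))).
  assert (gw : g w <> 0%C).
  { intro E. rewrite E in Hd'. replace (0 - g p)%C with (- g p)%C in Hd' by ring.
    rewrite Cmod_opp in Hd'. lra. }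
  replace (- phi w * / (g w * g p) * (w - p))%C with (- (phi w * (w - p)) * / (g w * g p))%C by ring.
  replace (phi w * (w - p))%C with (g w - g p)%C by (rewrite H; ring).
  field. split; auto.
Qed.

Lemma Cdiff_at_div g h p :
  Cdiff_at g p -> Cdiff_at h p -> h p <> 0%C -> Cdiff_at (fun w => g w / h w)%C p.
Proof. intros. apply Cdiff_at_mult; auto. apply Cdiff_at_inv; auto. Qed.

(** * Integrals along segments *)

(** Coquelicot's linearity lemmas, specialised to real-valued integrands so
    that they can be used for rewriting. *)
Lemma RInt_Rplus (f g : R -> R) a b : ex_RInt f a b -> ex_RInt g a b ->
  RInt (fun x => f x + g x) a b = RInt f a b + RInt g a b.
Proof. exact (RInt_plus f g a b). Qed.

Lemma RInt_Rminus (f g : R -> R) a b : ex_RInt f a b -> ex_RInt g a b ->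
  RInt (fun x => f x - g x) a b = RInt f a b - RInt g a b.
Proof. exact (RInt_minus f g a b). Qed.

Lemma RInt_Rscal (f : R -> R) a b l : ex_RInt f a b ->
  RInt (fun x => l * f x) a b = l * RInt f a b.
Proof. exact (RInt_scal f a b l). Qed.

Lemma ex_RInt_Rplus (f g : R -> R) a b : ex_RInt f a b -> ex_RInt g a b ->
  ex_RInt (fun x => f x + g x) a b.
Proof. exact (ex_RInt_plus f g a b). Qed.

Lemma ex_RInt_Rminus (f g : R -> R) a b : ex_RInt f a b -> ex_RInt g a b ->
  ex_RInt (fun x => f x - g x) a b.
Proof. exact (ex_RInt_minus f g a b). Qed.

Lemma ex_RInt_Rscal (f : R -> R) a b l : ex_RInt f a b -> ex_RInt (fun x => l * f x) a b.
Proof. exact (ex_RInt_scal f a b l). Qed.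

Lemma RInt_ext01 (f g : R -> R) : (forall x, 0 <= x <= 1 -> f x = g x) -> RInt f 0 1 = RInt g 0 1.
Proof. intros H. apply RInt_ext. rewrite Rmin_left, Rmax_right by lra. intros; apply H; lra. Qed.

Lemma ex_RInt_ext01 (f g : R -> R) :
  (forall x, 0 <= x <= 1 -> f x = g x) -> ex_RInt f 0 1 -> ex_RInt g 0 1.
Proof. intros H. apply ex_RInt_ext. rewrite Rmin_left, Rmax_right by lra. intros; apply H; lra. Qed.

Lemma RInt_split_half (F : R -> R) : ex_RInt F 0 1 ->
  RInt F 0 1 = RInt (fun s => / 2 * F (/ 2 * s + 0)) 0 1 + RInt (fun s => / 2 * F (/ 2 * s + / 2)) 0 1.
Proof.
  intros H.
  assert (H1 : ex_RInt F 0 (/2)) by (apply (ex_RInt_Chasles_1 (V:=R_CompleteNormedModule)) with 1; [lra|auto]).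
  assert (H2 : ex_RInt F (/2) 1) by (apply (ex_RInt_Chasles_2 (V:=R_CompleteNormedModule)) with 0; [lra|auto]).
  rewrite <- (RInt_Chasles F 0 (/2) 1 H1 H2).
  pose proof (RInt_comp_lin F (/2) 0 0 1) as E1. pose proof (RInt_comp_lin F (/2) (/2) 0 1) as E2.
  replace (/ 2 * 0 + 0) with 0 in E1 by ring. replace (/ 2 * 1 + 0) with (/2) in E1 by ring.
  replace (/ 2 * 0 + / 2) with (/2) in E2 by ring. replace (/ 2 * 1 + / 2) with 1 in E2 by field.
  specialize (E1 H1). specialize (E2 H2).
  unfold scal in E1, E2; simpl in E1, E2; unfold mult in E1, E2; simpl in E1, E2.
  rewrite E1, E2. reflexivity.
Qed.

(** Coquelicot states some real equations at the type of a normed module;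
    [Req] retypes them at [R] so that [ring] and [field] apply. *)
Ltac Req := match goal with |- ?u = ?v => change (@eq R u v) end.

Lemma RInt_reverse01 (F : R -> R) : ex_RInt F 0 1 ->
  ex_RInt (fun s => F (1 - s)) 0 1 /\ RInt (fun s => F (1 - s)) 0 1 = RInt F 0 1.
Proof.
  intros H.
  assert (H' : ex_RInt F (-1 * 0 + 1) (-1 * 1 + 1)).
  { replace (-1 * 0 + 1) with 1 by ring. replace (-1 * 1 + 1) with 0 by ring.
    apply (ex_RInt_swap (V:=R_CompleteNormedModule)); auto. }
  assert (Hext : forall y, 0 <= y <= 1 -> F (1 - y) = -1 * scal (-1) (F (-1 * y + 1))).
  { intros y _. unfold scal; simpl; unfold mult; simpl. replace (-1 * y + 1) with (1 - y) by ring. ring. }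
  pose proof (ex_RInt_comp_lin F (-1) 1 0 1 H') as Hc.
  split.
  - eapply ex_RInt_ext01; [intros y Hy; symmetry; apply Hext, Hy|]. apply ex_RInt_Rscal; exact Hc.
  - pose proof (RInt_comp_lin F (-1) 1 0 1 H') as E.
    replace (-1 * 0 + 1) with 1 in E by ring. replace (-1 * 1 + 1) with 0 in E by ring.
    rewrite <- (opp_RInt_swap F 0 1 H) in E.
    rewrite (RInt_ext01 _ _ Hext), RInt_Rscal by exact Hc.
    assert (E' : RInt (fun y => scal (-1) (F (-1 * y + 1))) 0 1 = - RInt F 0 1) by exact E.
    rewrite E'. Req. ring.
Qed.

Definition CInt01 (h : R -> C) : C :=
  (RInt (fun t => fst (h t)) 0 1, RInt (fun t => snd (h t)) 0 1).

Definition ex_CInt01 (h : R -> C) : Prop :=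
  ex_RInt (fun t => fst (h t)) 0 1 /\ ex_RInt (fun t => snd (h t)) 0 1.

Lemma CInt01_ext h1 h2 : (forall t, 0 <= t <= 1 -> h1 t = h2 t) -> CInt01 h1 = CInt01 h2.
Proof. intros H. unfold CInt01. f_equal; apply RInt_ext01; intros; rewrite H; auto. Qed.

Lemma CInt01_plus h1 h2 : ex_CInt01 h1 -> ex_CInt01 h2 ->
  CInt01 (fun t => h1 t + h2 t)%C = (CInt01 h1 + CInt01 h2)%C.
Proof.
  intros [a1 a2] [b1 b2]. unfold CInt01, Cplus. simpl.
  rewrite <- !RInt_Rplus by auto. reflexivity.
Qed.

Lemma CInt01_scal (c : C) h : ex_CInt01 h ->
  ex_CInt01 (fun t => c * h t)%C /\ CInt01 (fun t => c * h t)%C = (c * CInt01 h)%C.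
Proof.
  intros [a1 a2]. unfold ex_CInt01, CInt01, Cmult. simpl. repeat split.
  - apply ex_RInt_Rminus; apply ex_RInt_Rscal; auto.
  - apply ex_RInt_Rplus; apply ex_RInt_Rscal; auto.
  - f_equal.
    + rewrite RInt_Rminus, !RInt_Rscal by (auto; apply ex_RInt_Rscal; auto). reflexivity.
    + rewrite RInt_Rplus, !RInt_Rscal by (auto; apply ex_RInt_Rscal; auto). reflexivity.
Qed.

(** The standard estimate |integral| <= sup |integrand| on [[0,1]]: we pair
    the integral with its conjugate to reduce to a real inequality. *)
Lemma Cmod_CInt01_le h M : ex_CInt01 h -> (forall t, 0 <= t <= 1 -> Cmod (h t) <= M) ->
  Cmod (CInt01 h) <= M.
Proof.
  intros Hok HM. assert (M0 : 0 <= M) by (eapply Rle_trans; [apply Cmod_ge_0| apply (HM 0); lra]).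
  destruct (Ceq_dec (CInt01 h) (RtoC 0)) as [E|E]; [rewrite E, Cmod_0; auto|].
  set (I := CInt01 h). set (cI := Cconj I).
  assert (HI : 0 < Cmod I) by (apply Cmod_gt_0; auto).
  destruct (CInt01_scal cI h Hok) as [[Hex _] Hsc].
  assert (Hsq : Cmod I * Cmod I = RInt (fun t => fst (cI * h t)%C) 0 1).
  { change (RInt (fun t => fst (cI * h t)%C) 0 1) with (fst (CInt01 (fun t => cI * h t)%C)).
    rewrite Hsc. unfold cI, Cconj, Cmod; simpl. rewrite sqrt_sqrt by nra. ring. }
  assert (Hle : RInt (fun t => fst (cI * h t)%C) 0 1 <= RInt (fun _ => Cmod I * M) 0 1).
  { apply RInt_le; [lra|auto|apply ex_RInt_const|]. intros t Ht.
    eapply Rle_trans; [apply Rle_abs|]. eapply Rle_trans; [apply re_le_Cmod|].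
    rewrite Cmod_mult. unfold cI. rewrite Cmod_conj.
    apply Rmult_le_compat_l; [apply Cmod_ge_0|apply HM; lra]. }
  rewrite <- Hsq, RInt_const in Hle.
  unfold scal in Hle; simpl in Hle; unfold mult in Hle; simpl in Hle.
  apply Rmult_le_reg_l with (Cmod I); auto. lra.
Qed.

Definition seg (z1 z2 : C) (t : R) : C := (z1 + RtoC t * (z2 - z1))%C.

Definition seg_int (g : C -> C) (z1 z2 : C) : C := CInt01 (fun t => g (seg z1 z2 t) * (z2 - z1))%C.

Definition seg_cont (g : C -> C) (z1 z2 : C) : Prop :=
  forall t, 0 <= t <= 1 -> Ccont_at g (seg z1 z2 t).

Lemma seg_fst z1 z2 t : fst (seg z1 z2 t) = fst z1 + t * (fst z2 - fst z1).
Proof. unfold seg; simpl; ring. Qed.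

Lemma seg_snd z1 z2 t : snd (seg z1 z2 t) = snd z1 + t * (snd z2 - snd z1).
Proof. unfold seg; simpl; ring. Qed.

Lemma Ccont_at_along_seg (G : C -> C) z1 z2 t0 : Ccont_at G (seg z1 z2 t0) ->
  forall eps, 0 < eps -> exists del, 0 < del /\
    forall t, Rabs (t - t0) < del -> Cmod (G (seg z1 z2 t) - G (seg z1 z2 t0)) < eps.
Proof.
  intros HG e He. destruct (HG e He) as [d [Hd H]].
  set (L := Cmod (z2 - z1) + 1). assert (HL : 0 < L) by (pose proof (Cmod_ge_0 (z2 - z1)); unfold L; lra).
  exists (d / L); split; [apply Rdiv_lt_0_compat; auto|]. intros t Ht. apply H.
  replace (seg z1 z2 t - seg z1 z2 t0)%C with (RtoC (t - t0) * (z2 - z1))%C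
    by (unfold seg; rewrite RtoC_minus; ring).
  rewrite Cmod_mult, Cmod_R.
  apply Rle_lt_trans with (Rabs (t - t0) * L).
  - apply Rmult_le_compat_l; [apply Rabs_pos|unfold L; lra].
  - apply Rmult_lt_reg_r with (/ L); [apply Rinv_0_lt_compat; auto|].
    replace (Rabs (t - t0) * L * / L) with (Rabs (t - t0)) by (field; lra). exact Ht.
Qed.

Lemma seg_cont_comp_continuous (G : C -> C) z1 z2 t0 : Ccont_at G (seg z1 z2 t0) ->
  continuous (fun t => fst (G (seg z1 z2 t))) t0 /\ continuous (fun t => snd (G (seg z1 z2 t))) t0 /\
  continuity_pt (fun t => Cmod (G (seg z1 z2 t))) t0.
Proof.
  intros HG. pose proof (Ccont_at_along_seg G z1 z2 t0 HG) as H.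
  repeat split; [apply continuity_pt_filterlim| apply continuity_pt_filterlim|];
    intros e He; destruct (H e He) as [d [Hd Hdel]]; exists d; split; auto;
    intros t [_ Ht]; specialize (Hdel t Ht); simpl; unfold R_dist.
  - eapply Rle_lt_trans; [|apply Hdel]. eapply Rle_trans; [|apply re_le_Cmod]. simpl. right; f_equal; ring.
  - eapply Rle_lt_trans; [|apply Hdel]. eapply Rle_trans; [|apply Cmod_im_le]. simpl. right; f_equal; ring.
  - pose proof (Cmod_reverse_triangle (G (seg z1 z2 t)) (G (seg z1 z2 t0))).
    pose proof (Cmod_reverse_triangle (G (seg z1 z2 t0)) (G (seg z1 z2 t))).
    rewrite Cmod_sub_sym in H1. apply Rabs_def1; lra.
Qed.

Lemma seg_cont_ex g z1 z2 : seg_cont g z1 z2 -> ex_CInt01 (fun t => g (seg z1 z2 t) * (z2 - z1))%C.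
Proof.
  intros H. assert (Hc : forall t, 0 <= t <= 1 -> Ccont_at (fun w => g w * (z2 - z1))%C (seg z1 z2 t))
    by (intros; apply Ccont_at_mult; auto; apply Ccont_at_const).
  split; apply (ex_RInt_continuous (V:=R_CompleteNormedModule)); rewrite Rmin_left, Rmax_right by lra;
    intros t Ht; apply (seg_cont_comp_continuous _ z1 z2 t (Hc t Ht)).
Qed.

Lemma seg_cont_bounded g z1 z2 : seg_cont g z1 z2 ->
  exists M, forall t, 0 <= t <= 1 -> Cmod (g (seg z1 z2 t)) <= M.
Proof.
  intros H. destruct (continuity_ab_maj (fun t => Cmod (g (seg z1 z2 t))) 0 1) as [t0 [H1 H2]].
  - lra.
  - intros; apply seg_cont_comp_continuous; auto.
  - exists (Cmod (g (seg z1 z2 t0))). auto.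
Qed.

Lemma seg_int_ext g1 g2 z1 z2 : (forall t, 0 <= t <= 1 -> g1 (seg z1 z2 t) = g2 (seg z1 z2 t)) ->
  seg_int g1 z1 z2 = seg_int g2 z1 z2.
Proof. intros H. unfold seg_int. apply CInt01_ext. intros; rewrite H; auto. Qed.

Lemma seg_int_plus g1 g2 z1 z2 : seg_cont g1 z1 z2 -> seg_cont g2 z1 z2 ->
  seg_int (fun w => g1 w + g2 w)%C z1 z2 = (seg_int g1 z1 z2 + seg_int g2 z1 z2)%C.
Proof.
  intros. unfold seg_int. rewrite <- CInt01_plus by (apply seg_cont_ex; auto).
  apply CInt01_ext; intros; ring.
Qed.

Lemma seg_int_scal c g z1 z2 : seg_cont g z1 z2 ->
  seg_int (fun w => c * g w)%C z1 z2 = (c * seg_int g z1 z2)%C.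
Proof.
  intros. unfold seg_int. rewrite <- (proj2 (CInt01_scal c _ (seg_cont_ex _ _ _ H))).
  apply CInt01_ext; intros; ring.
Qed.

Lemma seg_int_ML g z1 z2 M : seg_cont g z1 z2 -> (forall t, 0 <= t <= 1 -> Cmod (g (seg z1 z2 t)) <= M) ->
  Cmod (seg_int g z1 z2) <= Cmod (z2 - z1) * M.
Proof.
  intros Hok HM. apply Cmod_CInt01_le; [apply seg_cont_ex; auto|].
  intros t Ht. rewrite Cmod_mult, Rmult_comm. apply Rmult_le_compat_l; [apply Cmod_ge_0|auto].
Qed.

Lemma seg_int_split g z1 z2 m : seg_cont g z1 z2 ->
  fst m = (fst z1 + fst z2) / 2 -> snd m = (snd z1 + snd z2) / 2 ->
  seg_int g z1 z2 = (seg_int g z1 m + seg_int g m z2)%C.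
Proof.
  intros Hok Hm1 Hm2. destruct (seg_cont_ex _ _ _ Hok) as [Ha Hb].
  assert (L : forall t, seg z1 z2 (/ 2 * t + 0) = seg z1 m t)
    by (intros; apply C_proj_eq; rewrite !seg_fst || rewrite !seg_snd; rewrite ?Hm1, ?Hm2; field).
  assert (R' : forall t, seg z1 z2 (/ 2 * t + / 2) = seg m z2 t)
    by (intros; apply C_proj_eq; rewrite !seg_fst || rewrite !seg_snd; rewrite ?Hm1, ?Hm2; field).
  unfold seg_int, CInt01, Cplus. cbn [fst snd].
  rewrite (RInt_split_half _ Ha), (RInt_split_half _ Hb).
  f_equal; f_equal; apply RInt_ext01; intros t _; rewrite ?L, ?R'; simpl; rewrite Hm1, Hm2; field.
Qed.

Lemma seg_int_rev g z1 z2 : seg_cont g z1 z2 -> seg_int g z2 z1 = (- seg_int g z1 z2)%C.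
Proof.
  intros Hok. destruct (seg_cont_ex _ _ _ Hok) as [Ha Hb].
  destruct (RInt_reverse01 _ Ha) as [Ha' Ea]. destruct (RInt_reverse01 _ Hb) as [Hb' Eb].
  assert (Hs : forall t, seg z2 z1 t = seg z1 z2 (1 - t))
    by (intros; apply C_proj_eq; rewrite !seg_fst || rewrite !seg_snd; ring).
  unfold seg_int, CInt01, Copp. cbn [fst snd]. rewrite <- Ea, <- Eb. f_equal.
  all: match goal with |- _ = - ?I => replace (- I) with (-1 * I) by ring end.
  - rewrite <- RInt_Rscal by exact Ha'. apply RInt_ext01; intros t _. rewrite Hs. simpl; ring.
  - rewrite <- RInt_Rscal by exact Hb'. apply RInt_ext01; intros t _. rewrite Hs. simpl; ring.
Qed.

(** * Integrals over the boundary of a rectangle *)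

Definition in_rect (x1 x2 y1 y2 : R) (z : C) : Prop := x1 <= fst z <= x2 /\ y1 <= snd z <= y2.

Definition on_bdry (x1 x2 y1 y2 : R) (z : C) : Prop :=
  in_rect x1 x2 y1 y2 z /\ (fst z = x1 \/ fst z = x2 \/ snd z = y1 \/ snd z = y2).

Definition rect_int (g : C -> C) (x1 x2 y1 y2 : R) : C :=
  (seg_int g (x1,y1) (x2,y1) + seg_int g (x2,y1) (x2,y2) +
   seg_int g (x2,y2) (x1,y2) + seg_int g (x1,y2) (x1,y1))%C.

Definition rect_cont (g : C -> C) (x1 x2 y1 y2 : R) : Prop :=
  forall z, in_rect x1 x2 y1 y2 z -> Ccont_at g z.

Definition bdry_cont (g : C -> C) (x1 x2 y1 y2 : R) : Prop :=
  forall z, on_bdry x1 x2 y1 y2 z -> Ccont_at g z.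

Lemma rect_bdry_cont g x1 x2 y1 y2 : rect_cont g x1 x2 y1 y2 -> bdry_cont g x1 x2 y1 y2.
Proof. intros H z [Hz _]. auto. Qed.

Lemma seg_in_rect x1 x2 y1 y2 z1 z2 t : in_rect x1 x2 y1 y2 z1 -> in_rect x1 x2 y1 y2 z2 ->
  0 <= t <= 1 -> in_rect x1 x2 y1 y2 (seg z1 z2 t).
Proof. unfold in_rect; rewrite seg_fst, seg_snd. intros [[? ?] [? ?]] [[? ?] [? ?]] [? ?]. repeat split; nra. Qed.

Lemma rect_cont_seg g x1 x2 y1 y2 z1 z2 : rect_cont g x1 x2 y1 y2 ->
  in_rect x1 x2 y1 y2 z1 -> in_rect x1 x2 y1 y2 z2 -> seg_cont g z1 z2.
Proof. intros H H1 H2 t Ht. apply H, seg_in_rect; auto. Qed.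

Lemma edges_on_bdry x1 x2 y1 y2 t : x1 <= x2 -> y1 <= y2 -> 0 <= t <= 1 ->
  on_bdry x1 x2 y1 y2 (seg (x1,y1) (x2,y1) t) /\ on_bdry x1 x2 y1 y2 (seg (x2,y1) (x2,y2) t) /\
  on_bdry x1 x2 y1 y2 (seg (x2,y2) (x1,y2) t) /\ on_bdry x1 x2 y1 y2 (seg (x1,y2) (x1,y1) t).
Proof.
  intros. unfold on_bdry, in_rect; rewrite !seg_fst, !seg_snd; simpl. repeat split; try nra.
  all: first [ left; ring | right; left; ring | right; right; left; ring | right; right; right; ring ].
Qed.

Lemma on_bdry_edges x1 x2 y1 y2 z : x1 < x2 -> y1 < y2 -> on_bdry x1 x2 y1 y2 z ->
  exists t, 0 <= t <= 1 /\ (z = seg (x1,y1) (x2,y1) t \/ z = seg (x2,y1) (x2,y2) t \/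
                           z = seg (x2,y2) (x1,y2) t \/ z = seg (x1,y2) (x1,y1) t).
Proof.
  intros Hx Hy [[Hz1 Hz2] [E|[E|[E|E]]]].
  - exists ((y2 - snd z) / (y2 - y1)). split.
    { split; [apply Rdiv_le_0_compat; lra|]. apply Rmult_le_reg_r with (y2 - y1); [lra|]. field_simplify; lra. }
    right; right; right. apply C_proj_eq; rewrite ?seg_fst, ?seg_snd; simpl; [lra|field; lra].
  - exists ((snd z - y1) / (y2 - y1)). split.
    { split; [apply Rdiv_le_0_compat; lra|]. apply Rmult_le_reg_r with (y2 - y1); [lra|]. field_simplify; lra. }
    right; left. apply C_proj_eq; rewrite ?seg_fst, ?seg_snd; simpl; [lra|field; lra].
  - exists ((fst z - x1) / (x2 - x1)). split.
    { split; [apply Rdiv_le_0_compat; lra|]. apply Rmult_le_reg_r with (x2 - x1); [lra|]. field_simplify; lra. }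
    left. apply C_proj_eq; rewrite ?seg_fst, ?seg_snd; simpl; [field; lra|lra].
  - exists ((x2 - fst z) / (x2 - x1)). split.
    { split; [apply Rdiv_le_0_compat; lra|]. apply Rmult_le_reg_r with (x2 - x1); [lra|]. field_simplify; lra. }
    right; right; left. apply C_proj_eq; rewrite ?seg_fst, ?seg_snd; simpl; [field; lra|lra].
Qed.

Section Boundary.
Variables x1 x2 y1 y2 : R.
Hypothesis Hx : x1 <= x2.
Hypothesis Hy : y1 <= y2.

Lemma bdry_cont_edges g : bdry_cont g x1 x2 y1 y2 ->
  seg_cont g (x1,y1) (x2,y1) /\ seg_cont g (x2,y1) (x2,y2) /\
  seg_cont g (x2,y2) (x1,y2) /\ seg_cont g (x1,y2) (x1,y1).
Proof.
  intros H. repeat split; intros t Ht; apply H;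
    destruct (edges_on_bdry x1 x2 y1 y2 t Hx Hy Ht) as [? [? [? ?]]]; auto.
Qed.

Lemma rect_int_ext g1 g2 : (forall z, on_bdry x1 x2 y1 y2 z -> g1 z = g2 z) ->
  rect_int g1 x1 x2 y1 y2 = rect_int g2 x1 x2 y1 y2.
Proof.
  intros H. unfold rect_int.
  repeat rewrite (seg_int_ext g1 g2); auto; intros t Ht; apply H;
    destruct (edges_on_bdry x1 x2 y1 y2 t Hx Hy Ht) as [? [? [? ?]]]; auto.
Qed.

Lemma rect_int_plus g1 g2 : bdry_cont g1 x1 x2 y1 y2 -> bdry_cont g2 x1 x2 y1 y2 ->
  rect_int (fun w => g1 w + g2 w)%C x1 x2 y1 y2 = (rect_int g1 x1 x2 y1 y2 + rect_int g2 x1 x2 y1 y2)%C.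
Proof.
  intros H1 H2. destruct (bdry_cont_edges _ H1) as [A1 [A2 [A3 A4]]].
  destruct (bdry_cont_edges _ H2) as [B1 [B2 [B3 B4]]].
  unfold rect_int. rewrite !seg_int_plus; auto. ring.
Qed.

Lemma rect_int_scal c g : bdry_cont g x1 x2 y1 y2 ->
  rect_int (fun w => c * g w)%C x1 x2 y1 y2 = (c * rect_int g x1 x2 y1 y2)%C.
Proof.
  intros H. destruct (bdry_cont_edges _ H) as [A1 [A2 [A3 A4]]].
  unfold rect_int. rewrite !seg_int_scal; auto. ring.
Qed.

Lemma rect_int_minus g1 g2 : bdry_cont g1 x1 x2 y1 y2 -> bdry_cont g2 x1 x2 y1 y2 ->
  rect_int (fun w => g1 w - g2 w)%C x1 x2 y1 y2 = (rect_int g1 x1 x2 y1 y2 - rect_int g2 x1 x2 y1 y2)%C.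
Proof.
  intros H1 H2.
  rewrite (rect_int_ext _ (fun w => g1 w + (- 1%C) * g2 w)%C) by (intros; ring).
  rewrite rect_int_plus, rect_int_scal; auto; [ring|].
  intros z Hz. apply Ccont_at_mult; [apply Ccont_at_const|auto].
Qed.

Lemma rect_int_ML g M : bdry_cont g x1 x2 y1 y2 -> (forall z, on_bdry x1 x2 y1 y2 z -> Cmod (g z) <= M) ->
  Cmod (rect_int g x1 x2 y1 y2) <= 2 * ((x2 - x1) + (y2 - y1)) * M.
Proof.
  intros Hok HM.
  assert (M0 : 0 <= M). { eapply Rle_trans; [apply Cmod_ge_0|apply (HM (x1,y1))]. unfold on_bdry, in_rect; simpl; lra. }
  destruct (bdry_cont_edges _ Hok) as [A1 [A2 [A3 A4]]].
  assert (E : forall t, 0 <= t <= 1 ->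
     Cmod (g (seg (x1,y1) (x2,y1) t)) <= M /\ Cmod (g (seg (x2,y1) (x2,y2) t)) <= M /\
     Cmod (g (seg (x2,y2) (x1,y2) t)) <= M /\ Cmod (g (seg (x1,y2) (x1,y1) t)) <= M).
  { intros t Ht. destruct (edges_on_bdry x1 x2 y1 y2 t Hx Hy Ht) as [? [? [? ?]]]. repeat split; apply HM; auto. }
  pose proof (seg_int_ML g _ _ M A1 (fun t Ht => proj1 (E t Ht))) as B1.
  pose proof (seg_int_ML g _ _ M A2 (fun t Ht => proj1 (proj2 (E t Ht)))) as B2.
  pose proof (seg_int_ML g _ _ M A3 (fun t Ht => proj1 (proj2 (proj2 (E t Ht))))) as B3.
  pose proof (seg_int_ML g _ _ M A4 (fun t Ht => proj2 (proj2 (proj2 (E t Ht))))) as B4.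
  assert (L1 : Cmod ((x2, y1) - (x1, y1))%C = x2 - x1) by (rewrite <- (Rabs_pos_eq (x2 - x1)) by lra;
    rewrite <- Cmod_R; f_equal; apply C_proj_eq; simpl; ring).
  assert (L3 : Cmod ((x1, y2) - (x2, y2))%C = x2 - x1) by (rewrite <- (Rabs_pos_eq (x2 - x1)) by lra;
    rewrite <- Cmod_R, <- Cmod_opp; f_equal; apply C_proj_eq; simpl; ring).
  assert (L2 : Cmod ((x2, y2) - (x2, y1))%C = y2 - y1) by (rewrite <- (Rabs_pos_eq (y2 - y1)) by lra;
    unfold Cmod; simpl; rewrite <- sqrt_Rsqr_abs; f_equal; unfold Rsqr; ring).
  assert (L4 : Cmod ((x1, y1) - (x1, y2))%C = y2 - y1) by (rewrite <- (Rabs_pos_eq (y2 - y1)) by lra;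
    unfold Cmod; simpl; rewrite <- sqrt_Rsqr_abs; f_equal; unfold Rsqr; ring).
  unfold rect_int. eapply Rle_trans; [apply Cmod_triangle|].
  pose proof (Cmod_triangle3 (seg_int g (x1, y1) (x2, y1)) (seg_int g (x2, y1) (x2, y2)) (seg_int g (x2, y2) (x1, y2))).
  rewrite L1 in B1; rewrite L2 in B2; rewrite L3 in B3; rewrite L4 in B4. lra.
Qed.

Lemma bdry_cont_bounded g : x1 < x2 -> y1 < y2 -> bdry_cont g x1 x2 y1 y2 ->
  exists M, 0 <= M /\ forall z, on_bdry x1 x2 y1 y2 z -> Cmod (g z) <= M.
Proof.
  intros Hx' Hy' H. destruct (bdry_cont_edges g H) as [A1 [A2 [A3 A4]]].
  destruct (seg_cont_bounded _ _ _ A1) as [M1 B1]. destruct (seg_cont_bounded _ _ _ A2) as [M2 B2].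
  destruct (seg_cont_bounded _ _ _ A3) as [M3 B3]. destruct (seg_cont_bounded _ _ _ A4) as [M4 B4].
  pose proof (Rabs_pos M1); pose proof (Rabs_pos M2); pose proof (Rabs_pos M3); pose proof (Rabs_pos M4).
  pose proof (Rle_abs M1); pose proof (Rle_abs M2); pose proof (Rle_abs M3); pose proof (Rle_abs M4).
  exists (Rabs M1 + Rabs M2 + Rabs M3 + Rabs M4). split; [lra|].
  intros z Hz. destruct (on_bdry_edges _ _ _ _ _ Hx' Hy' Hz) as [t [Ht [E|[E|[E|E]]]]]; subst z.
  - specialize (B1 t Ht); lra.
  - specialize (B2 t Ht); lra.
  - specialize (B3 t Ht); lra.
  - specialize (B4 t Ht); lra.
Qed.

Lemma rect_int_sum (h : nat -> C -> C) (c : nat -> C) m :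
  (forall i, bdry_cont (h i) x1 x2 y1 y2) ->
  rect_int (fun w => Csum (fun i => h i w * c i) m)%C x1 x2 y1 y2 =
  Csum (fun i => rect_int (h i) x1 x2 y1 y2 * c i)%C m.
Proof.
  intros H.
  assert (Hc : forall i, bdry_cont (fun w => c i * h i w)%C x1 x2 y1 y2)
    by (intros i z Hz; apply Ccont_at_mult; [apply Ccont_at_const|apply H; auto]).
  assert (Hi : forall i, rect_int (fun w => h i w * c i)%C x1 x2 y1 y2 = (rect_int (h i) x1 x2 y1 y2 * c i)%C)
    by (intros i; rewrite (rect_int_ext _ (fun w => c i * h i w)%C), rect_int_scal by (auto; intros; ring); ring).
  induction m as [|m IH]; [apply Hi|].
  change (Csum ?u (S m)) with (Csum u m + u (S m))%C. rewrite rect_int_plus, IH, Hi; auto.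
  - intros z Hz. apply Ccont_at_Csum. intros i. apply Ccont_at_mult; [apply H; auto|apply Ccont_at_const].
  - intros z Hz. apply Ccont_at_mult; [apply H; auto|apply Ccont_at_const].
Qed.

End Boundary.

(** * Goursat's theorem for rectangles

    Classical proof: quartering the
    rectangle and keeping a quarter with the largest integral produces nested
    rectangles [s k] with |I(r0)| <= 4^k |I(s k)|; near their common point [p],
    [g] differs from an affine function (whose integral vanishes) by
    [o(|w - p|)], so |I(s k)| = o(4^-k), a contradiction unless I(r0) = 0. *)

(** Cutting a rectangle into four quarters: the inner edges cancel. *)
Lemma rect_int_quarter g x1 x2 y1 y2 : x1 <= x2 -> y1 <= y2 -> rect_cont g x1 x2 y1 y2 ->
  let mx := (x1 + x2) / 2 in let my := (y1 + y2) / 2 in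
  rect_int g x1 x2 y1 y2 =
  (rect_int g x1 mx y1 my + rect_int g mx x2 y1 my + rect_int g mx x2 my y2 + rect_int g x1 mx my y2)%C.
Proof.
  intros Hx Hy Hok mx my.
  assert (Hmx : x1 <= mx <= x2) by (unfold mx; lra). assert (Hmy : y1 <= my <= y2) by (unfold my; lra).
  assert (S : forall z1 z2, in_rect x1 x2 y1 y2 z1 -> in_rect x1 x2 y1 y2 z2 -> seg_cont g z1 z2)
    by (intros; eapply rect_cont_seg; eauto).
  unfold rect_int.
  rewrite (seg_int_split g (x1,y1) (x2,y1) (mx,y1)), (seg_int_split g (x2,y1) (x2,y2) (x2,my)),
    (seg_int_split g (x2,y2) (x1,y2) (mx,y2)), (seg_int_split g (x1,y2) (x1,y1) (x1,my)),
    (seg_int_rev g (mx,my) (mx,y1)), (seg_int_rev g (x1,my) (mx,my)),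
    (seg_int_rev g (mx,my) (x2,my)), (seg_int_rev g (mx,y2) (mx,my)).
  - ring.
  all: try apply S; unfold in_rect; simpl; unfold mx, my; lra.
Qed.

Lemma RInt_affine01 (a b : R) : RInt (fun t => a + t * b) 0 1 = a + b / 2.
Proof.
  apply is_RInt_unique.
  replace (a + b / 2) with ((a * 1 + 1 * 1 * b / 2) - (a * 0 + 0 * 0 * b / 2)) by field.
  apply (is_RInt_derive (V:=R_CompleteNormedModule) (fun t => a * t + t * t * b / 2)).
  - intros x _. auto_derive; auto. Req. field.
  - intros x _. apply continuity_pt_filterlim. apply continuity_pt_plus.
    + intros e He. exists 1. split; [lra|]. intros. simpl. unfold R_dist. rewrite Rminus_diag, Rabs_R0. auto.
    + apply continuity_pt_mult; [apply derivable_continuous_pt, derivable_pt_id|].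
      intros e He. exists 1. split; [lra|]. intros. simpl. unfold R_dist. rewrite Rminus_diag, Rabs_R0. auto.
Qed.

(** Affine functions have primitives, so their boundary integrals vanish. *)
Lemma seg_int_affine c0 c1 z1 z2 : seg_int (fun w => c0 + c1 * w)%C z1 z2 =
  (c0 * (z2 - z1) + c1 * (z2 * z2 - z1 * z1) / RtoC 2)%C.
Proof.
  set (A := ((c0 + c1 * z1) * (z2 - z1))%C). set (B := (c1 * (z2 - z1) * (z2 - z1))%C).
  unfold seg_int. rewrite (CInt01_ext _ (fun t => A + RtoC t * B)%C) by (intros; unfold seg, A, B; ring).
  unfold CInt01.
  rewrite (RInt_ext01 _ (fun t => fst A + t * fst B)), (RInt_ext01 (fun t => snd _) (fun t => snd A + t * snd B))
    by (intros; simpl; ring).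
  rewrite !RInt_affine01.
  assert (Half : forall U V : C, (fst U + fst V / 2, snd U + snd V / 2) = (U + V / RtoC 2)%C)
    by (intros [u1 u2] [v1 v2]; unfold Cplus, Cdiv, Cmult, Cinv, RtoC; simpl; f_equal; field).
  rewrite Half. unfold A, B. field.
Qed.

Lemma rect_int_affine c0 c1 x1 x2 y1 y2 : rect_int (fun w => c0 + c1 * w)%C x1 x2 y1 y2 = RtoC 0.
Proof. unfold rect_int. rewrite !seg_int_affine. field. Qed.

Lemma rect_int_small g p : Cdiff_at g p -> forall eps, 0 < eps -> exists d, 0 < d /\
  forall x1 x2 y1 y2, x1 <= x2 -> y1 <= y2 -> in_rect x1 x2 y1 y2 p ->
    (x2 - x1) + (y2 - y1) < d -> rect_cont g x1 x2 y1 y2 ->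
    Cmod (rect_int g x1 x2 y1 y2) <= 2 * eps * (((x2 - x1) + (y2 - y1)) * ((x2 - x1) + (y2 - y1))).
Proof.
  intros [r [Hr [phi [Hphi Heq]]]] eps Heps.
  destruct (Hphi eps Heps) as [del [Hdel Hd]].
  exists (Rmin r del). split; [apply Rmin_pos; auto|].
  intros x1 x2 y1 y2 Hx Hy Hp Hsmall Hg. set (L := (x2 - x1) + (y2 - y1)) in *.
  set (aff := fun w => (g p - phi p * p + phi p * w)%C).
  assert (Haff : rect_cont aff x1 x2 y1 y2).
  { intros z _. apply Ccont_at_plus; [apply Ccont_at_const|]. apply Ccont_at_mult; [apply Ccont_at_const|apply Ccont_at_id]. }
  assert (E : rect_int g x1 x2 y1 y2 = rect_int (fun w => g w - aff w)%C x1 x2 y1 y2).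
  { rewrite rect_int_minus by (auto; apply rect_bdry_cont; auto). unfold aff. rewrite rect_int_affine. ring. }
  rewrite E. replace (2 * eps * (L * L)) with (2 * L * (eps * L)) by ring.
  replace L with ((x2 - x1) + (y2 - y1)) at 1 by reflexivity.
  apply rect_int_ML; auto.
  { intros z Hz. apply Ccont_at_minus; [apply Hg|apply Haff]; apply Hz. }
  intros z [Hz _].
  assert (Dz : Cmod (z - p) <= L).
  { eapply Rle_trans; [apply Cmod_le_abs_sum|]. unfold in_rect in *. simpl.
    apply Rplus_le_compat; apply Rabs_le; unfold L; lra. }
  rewrite (Heq z) by (eapply Rle_lt_trans; [apply Dz|eapply Rlt_le_trans; [apply Hsmall|apply Rmin_l]]).
  replace (g p + phi z * (z - p) - aff z)%C with ((phi z - phi p) * (z - p))%C by (unfold aff; ring).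
  rewrite Cmod_mult. apply Rmult_le_compat; try apply Cmod_ge_0; auto. left. apply Hd.
  eapply Rle_lt_trans; [apply Dz|eapply Rlt_le_trans; [apply Hsmall|apply Rmin_r]].
Qed.

Record rect := Rect { rx1 : R; rx2 : R; ry1 : R; ry2 : R }.

Definition rI (g : C -> C) (r : rect) : C := rect_int g (rx1 r) (rx2 r) (ry1 r) (ry2 r).

Definition quarter (r : rect) (i : nat) : rect :=
  let mx := (rx1 r + rx2 r) / 2 in let my := (ry1 r + ry2 r) / 2 in
  match i with
  | O => Rect (rx1 r) mx (ry1 r) my
  | 1%nat => Rect mx (rx2 r) (ry1 r) my
  | 2%nat => Rect mx (rx2 r) my (ry2 r)
  | _ => Rect (rx1 r) mx my (ry2 r)
  end.

Definition larger g (r r' : rect) : rect := if Rle_dec (Cmod (rI g r')) (Cmod (rI g r)) then r else r'.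

Definition next_rect g r : rect :=
  larger g (larger g (quarter r 0) (quarter r 1)) (larger g (quarter r 2) (quarter r 3)).

Lemma larger_ge g r r' : Cmod (rI g r) <= Cmod (rI g (larger g r r')) /\ Cmod (rI g r') <= Cmod (rI g (larger g r r')).
Proof. unfold larger. destruct (Rle_dec _ _); lra. Qed.

Lemma next_rect_is_quarter g r : exists i, next_rect g r = quarter r i.
Proof.
  unfold next_rect, larger.
  repeat destruct (Rle_dec _ _); eexists; reflexivity.
Qed.

Lemma next_rect_ge g r : rx1 r <= rx2 r -> ry1 r <= ry2 r -> rect_cont g (rx1 r) (rx2 r) (ry1 r) (ry2 r) ->
  Cmod (rI g r) <= 4 * Cmod (rI g (next_rect g r)).
Proof.
  intros Hx Hy Hok. unfold rI at 1. rewrite (rect_int_quarter g _ _ _ _ Hx Hy Hok). cbv zeta.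
  unfold next_rect.
  destruct (larger_ge g (quarter r 0) (quarter r 1)) as [A1 A2].
  destruct (larger_ge g (quarter r 2) (quarter r 3)) as [A3 A4].
  destruct (larger_ge g (larger g (quarter r 0) (quarter r 1)) (larger g (quarter r 2) (quarter r 3))) as [B1 B2].
  unfold rI, quarter in *; simpl in *.
  eapply Rle_trans; [apply Cmod_triangle|]. eapply Rle_trans; [apply Rplus_le_compat_r, Cmod_triangle3|]. lra.
Qed.

Lemma quarter_shape r i : rx1 r <= rx2 r -> ry1 r <= ry2 r ->
  rx1 r <= rx1 (quarter r i) /\ rx1 (quarter r i) <= rx2 (quarter r i) /\ rx2 (quarter r i) <= rx2 r /\
  ry1 r <= ry1 (quarter r i) /\ ry1 (quarter r i) <= ry2 (quarter r i) /\ ry2 (quarter r i) <= ry2 r /\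
  (rx2 (quarter r i) - rx1 (quarter r i)) * 2 = rx2 r - rx1 r /\
  (ry2 (quarter r i) - ry1 (quarter r i)) * 2 = ry2 r - ry1 r.
Proof. intros. destruct i as [|[|[|i]]]; simpl; repeat split; lra. Qed.

Fixpoint bisect g r0 (k : nat) : rect :=
  match k with O => r0 | S k => next_rect g (bisect g r0 k) end.

Section Goursat.
Variable g : C -> C.
Variable r0 : rect.
Hypothesis Hx0 : rx1 r0 < rx2 r0.
Hypothesis Hy0 : ry1 r0 < ry2 r0.
Hypothesis Hdiff : forall z, in_rect (rx1 r0) (rx2 r0) (ry1 r0) (ry2 r0) z -> Cdiff_at g z.

Let s k := bisect g r0 k.

Lemma bisect_step k : rx1 (s k) <= rx2 (s k) -> ry1 (s k) <= ry2 (s k) ->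
  rx1 (s k) <= rx1 (s (S k)) /\ rx1 (s (S k)) <= rx2 (s (S k)) /\ rx2 (s (S k)) <= rx2 (s k) /\
  ry1 (s k) <= ry1 (s (S k)) /\ ry1 (s (S k)) <= ry2 (s (S k)) /\ ry2 (s (S k)) <= ry2 (s k) /\
  (rx2 (s (S k)) - rx1 (s (S k))) * 2 = rx2 (s k) - rx1 (s k) /\
  (ry2 (s (S k)) - ry1 (s (S k))) * 2 = ry2 (s k) - ry1 (s k).
Proof.
  intros. change (s (S k)) with (next_rect g (s k)).
  destruct (next_rect_is_quarter g (s k)) as [i ->]. apply quarter_shape; auto.
Qed.

Lemma bisect_invariants k :
  rx1 r0 <= rx1 (s k) /\ rx1 (s k) <= rx2 (s k) /\ rx2 (s k) <= rx2 r0 /\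
  ry1 r0 <= ry1 (s k) /\ ry1 (s k) <= ry2 (s k) /\ ry2 (s k) <= ry2 r0 /\
  (rx2 (s k) - rx1 (s k)) * 2 ^ k = rx2 r0 - rx1 r0 /\ (ry2 (s k) - ry1 (s k)) * 2 ^ k = ry2 r0 - ry1 r0 /\
  Cmod (rI g r0) <= (2 ^ k * 2 ^ k) * Cmod (rI g (s k)).
Proof.
  induction k as [|k IH].
  - unfold s; simpl. repeat split; lra.
  - destruct IH as [A1 [A2 [A3 [A4 [A5 [A6 [A7 [A8 A9]]]]]]]].
    assert (Hok : rect_cont g (rx1 (s k)) (rx2 (s k)) (ry1 (s k)) (ry2 (s k)))
      by (intros z Hz; apply Cdiff_at_cont, Hdiff; unfold in_rect in *; lra).
    pose proof (next_rect_ge g (s k) A2 A5 Hok) as G. change (next_rect g (s k)) with (s (S k)) in G.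
    destruct (bisect_step k A2 A5) as [B1 [B2 [B3 [B4 [B5 [B6 [B7 B8]]]]]]].
    assert (P : 0 <= 2 ^ k * 2 ^ k) by (apply Rmult_le_pos; apply pow_le; lra).
    simpl pow. repeat split; try lra.
    + rewrite <- A7, <- B7. ring.
    + rewrite <- A8, <- B8. ring.
    + eapply Rle_trans; [apply A9|]. replace (2 * 2 ^ k * (2 * 2 ^ k)) with ((2 ^ k * 2 ^ k) * 4) by ring. nra.
Qed.

Lemma bisect_common_point : exists p : C, forall k, in_rect (rx1 (s k)) (rx2 (s k)) (ry1 (s k)) (ry2 (s k)) p.
Proof.
  assert (Mon : forall n m, (n <= m)%nat ->
    rx1 (s n) <= rx1 (s m) /\ rx2 (s m) <= rx2 (s n) /\ ry1 (s n) <= ry1 (s m) /\ ry2 (s m) <= ry2 (s n)).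
  { induction 1; [lra|]. destruct (bisect_invariants m) as [_ [A2 [_ [_ [A5 _]]]]].
    destruct (bisect_step m A2 A5) as [B1 [_ [B3 [B4 [_ [B6 _]]]]]]. lra. }
  assert (Cross : forall n m, rx1 (s n) <= rx2 (s m) /\ ry1 (s n) <= ry2 (s m)).
  { intros n m. destruct (Compare_dec.le_lt_dec n m) as [h|h].
    - pose proof (Mon n m h); pose proof (bisect_invariants m). lra.
    - assert (h' : (m <= n)%nat) by lia. pose proof (Mon m n h'); pose proof (bisect_invariants n). lra. }
  assert (Gx : Un_growing (fun k => rx1 (s k))) by (intros n; apply (Mon n (S n)); lia).
  assert (Gy : Un_growing (fun k => ry1 (s k))) by (intros n; apply (Mon n (S n)); lia).
  destruct (growing_cv _ Gx) as [px Hpx]. { exists (rx2 r0). intros x [k ->]. apply (Cross k O). }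
  destruct (growing_cv _ Gy) as [py Hpy]. { exists (ry2 r0). intros x [k ->]. apply (Cross k O). }
  assert (Cst : forall c, Un_cv (fun _ => c) c)
    by (intros c e He; exists O; intros; unfold R_dist; rewrite Rminus_diag, Rabs_R0; auto).
  exists (px, py). intros k. unfold in_rect; simpl. repeat split.
  - apply (growing_ineq _ _ Gx Hpx).
  - apply (Rle_cv_lim (Un := fun n => rx1 (s n)) (Vn := fun _ => rx2 (s k))); auto. intros; apply Cross.
  - apply (growing_ineq _ _ Gy Hpy).
  - apply (Rle_cv_lim (Un := fun n => ry1 (s n)) (Vn := fun _ => ry2 (s k))); auto. intros; apply Cross.
Qed.

Theorem goursat_bisect : rI g r0 = RtoC 0.
Proof.
  destruct (Ceq_dec (rI g r0) (RtoC 0)) as [E|E]; auto. exfalso.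
  set (c := Cmod (rI g r0)). assert (Hc : 0 < c) by (apply Cmod_gt_0; auto).
  set (L := (rx2 r0 - rx1 r0) + (ry2 r0 - ry1 r0)). assert (HL : 0 < L) by (unfold L; lra).
  destruct bisect_common_point as [p Hp].
  set (eps := c / (8 * L * L)). assert (Heps : 0 < eps) by (apply Rdiv_lt_0_compat; nra).
  destruct (rect_int_small g p (Hdiff p (Hp O)) eps Heps) as [d [Hd Hsmall]].
  destruct (Pow_x_infinity 2 ltac:(rewrite Rabs_right; lra) (L / d + 1)) as [k Hk].
  specialize (Hk k (Nat.le_refl k)). rewrite Rabs_right in Hk by (apply Rle_ge, pow_le; lra).
  assert (P2k : 0 < 2 ^ k) by (apply pow_lt; lra).
  destruct (bisect_invariants k) as [A1 [A2 [A3 [A4 [A5 [A6 [A7 [A8 A9]]]]]]]].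
  set (Lk := (rx2 (s k) - rx1 (s k)) + (ry2 (s k) - ry1 (s k))).
  assert (HLk : Lk * 2 ^ k = L) by (unfold Lk, L; rewrite <- A7, <- A8; ring).
  assert (Hlt : Lk < d).
  { apply Rmult_lt_reg_r with (2 ^ k); auto. rewrite HLk.
    apply Rmult_lt_reg_l with (/ d); [apply Rinv_0_lt_compat; auto|].
    replace (/ d * (d * 2 ^ k)) with (2 ^ k) by (field; lra). unfold Rdiv in Hk. lra. }
  assert (Hok : rect_cont g (rx1 (s k)) (rx2 (s k)) (ry1 (s k)) (ry2 (s k)))
    by (intros z Hz; apply Cdiff_at_cont, Hdiff; unfold in_rect in *; lra).
  pose proof (Hsmall _ _ _ _ A2 A5 (Hp k) Hlt Hok) as B. fold Lk in B.
  assert (Key : c <= 2 * eps * ((Lk * 2 ^ k) * (Lk * 2 ^ k))).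
  { eapply Rle_trans; [apply A9|]. unfold rI.
    replace (2 * eps * ((Lk * 2 ^ k) * (Lk * 2 ^ k))) with ((2 ^ k * 2 ^ k) * (2 * eps * (Lk * Lk))) by ring.
    apply Rmult_le_compat_l; [nra|exact B]. }
  rewrite HLk in Key. unfold eps in Key.
  replace (2 * (c / (8 * L * L)) * (L * L)) with (c / 4) in Key by (field; lra). lra.
Qed.

End Goursat.

Theorem goursat g x1 x2 y1 y2 : x1 < x2 -> y1 < y2 ->
  (forall z, in_rect x1 x2 y1 y2 z -> Cdiff_at g z) -> rect_int g x1 x2 y1 y2 = RtoC 0.
Proof. intros Hx Hy Hd. exact (goursat_bisect g (Rect x1 x2 y1 y2) Hx Hy Hd). Qed.

(** * The winding number of a rectangle around an interior point

    The integral of [1/(w - p)] along each edge is computed from explicit real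
    primitives ([ln] of the squared distance and [atan] of a slope); the [atan]
    terms add up to [2 pi]. *)

Lemma RInt01_primitive (F f : R -> R) : (forall t, 0 <= t <= 1 -> is_derive F t (f t)) ->
  (forall t, 0 <= t <= 1 -> continuous f t) -> RInt f 0 1 = F 1 - F 0.
Proof.
  intros H1 H2. apply is_RInt_unique.
  apply (is_RInt_derive (V:=R_CompleteNormedModule) F f); rewrite Rmin_left, Rmax_right by lra; auto.
Qed.

(** Side conditions [u^2 + v^2 <> 0], where [v^2 > 0] is known, left by [auto_derive] and [field]. *)
Ltac pos_sq_sum :=
  repeat split; try assumption; try (apply Rgt_not_eq; unfold Rgt);
  match goal with
  | |- 0 < ?x * (?x * 1) + ?y * (?y * 1) =>
      pose proof (Rle_0_sqr x); pose proof (Rle_0_sqr y); unfold Rsqr in *; nra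
  | |- 0 < ?x * ?x + ?y * ?y => pose proof (Rle_0_sqr x); pose proof (Rle_0_sqr y); unfold Rsqr in *; nra
  | |- 0 < ?x ^ 2 + ?y ^ 2 => pose proof (pow2_ge_0 x); pose proof (pow2_ge_0 y); nra
  end.

Lemma seg_int_inv_horizontal u0 u1 v px py : v - py <> 0 ->
  seg_int (fun w => / (w - (px, py)))%C (u0, v) (u1, v) =
  ((ln ((u1 - px) ^ 2 + (v - py) ^ 2) - ln ((u0 - px) ^ 2 + (v - py) ^ 2)) / 2,
   - (atan ((u1 - px) / (v - py)) - atan ((u0 - px) / (v - py)))).
Proof.
  intros Hb. set (b := v - py) in *. assert (Hb2 : 0 < b ^ 2) by (apply pow2_gt_0; auto).
  set (X t := u0 + t * (u1 - u0) - px).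
  assert (EX1 : X 1 = u1 - px) by (unfold X; ring). assert (EX0 : X 0 = u0 - px) by (unfold X; ring).
  unfold seg_int, CInt01. f_equal.
  - rewrite (RInt_ext01 _ (fun t => (u1 - u0) * X t / (X t ^ 2 + b ^ 2))).
    + rewrite (RInt01_primitive (fun t => ln (X t ^ 2 + b ^ 2) / 2)), EX1, EX0; [unfold b; Req; field| |].
      * intros t _. unfold X; cbv beta. auto_derive; [pos_sq_sum|]. Req. field. pos_sq_sum.
      * intros t _. apply (ex_derive_continuous (K:=R_AbsRing) (V:=R_NormedModule)). unfold X; cbv beta. auto_derive. pos_sq_sum.
    + intros t _. unfold seg, X, Cinv, Cmult, Cminus, Cplus, Copp, RtoC; simpl. unfold b. field.
      unfold b in Hb2. pos_sq_sum.
  - rewrite (RInt_ext01 _ (fun t => - (u1 - u0) * b / (X t ^ 2 + b ^ 2))).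
    + rewrite (RInt01_primitive (fun t => - atan (X t / b))), EX1, EX0; [unfold b; Req; ring| |].
      * intros t _. unfold X; cbv beta. auto_derive; auto. Req. field. pos_sq_sum.
      * intros t _. apply (ex_derive_continuous (K:=R_AbsRing) (V:=R_NormedModule)). unfold X; cbv beta. auto_derive. pos_sq_sum.
    + intros t _. unfold seg, X, Cinv, Cmult, Cminus, Cplus, Copp, RtoC; simpl. unfold b. field.
      unfold b in Hb2. pos_sq_sum.
Qed.

Lemma seg_int_inv_vertical v0 v1 u px py : u - px <> 0 ->
  seg_int (fun w => / (w - (px, py)))%C (u, v0) (u, v1) =
  ((ln ((u - px) ^ 2 + (v1 - py) ^ 2) - ln ((u - px) ^ 2 + (v0 - py) ^ 2)) / 2,
   atan ((v1 - py) / (u - px)) - atan ((v0 - py) / (u - px))).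
Proof.
  intros Ha. set (a := u - px) in *. assert (Ha2 : 0 < a ^ 2) by (apply pow2_gt_0; auto).
  set (Y t := v0 + t * (v1 - v0) - py).
  assert (EY1 : Y 1 = v1 - py) by (unfold Y; ring). assert (EY0 : Y 0 = v0 - py) by (unfold Y; ring).
  unfold seg_int, CInt01. f_equal.
  - rewrite (RInt_ext01 _ (fun t => (v1 - v0) * Y t / (a ^ 2 + Y t ^ 2))).
    + rewrite (RInt01_primitive (fun t => ln (a ^ 2 + Y t ^ 2) / 2)), EY1, EY0; [unfold a; Req; field| |].
      * intros t _. unfold Y; cbv beta. auto_derive; [pos_sq_sum|]. Req. field. pos_sq_sum.
      * intros t _. apply (ex_derive_continuous (K:=R_AbsRing) (V:=R_NormedModule)). unfold Y; cbv beta. auto_derive. pos_sq_sum.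
    + intros t _. unfold seg, Y, Cinv, Cmult, Cminus, Cplus, Copp, RtoC; simpl. unfold a. field.
      unfold a in Ha2. pos_sq_sum.
  - rewrite (RInt_ext01 _ (fun t => (v1 - v0) * a / (a ^ 2 + Y t ^ 2))).
    + rewrite (RInt01_primitive (fun t => atan (Y t / a))), EY1, EY0; [unfold a; Req; ring| |].
      * intros t _. unfold Y; cbv beta. auto_derive; auto. Req. field. pos_sq_sum.
      * intros t _. apply (ex_derive_continuous (K:=R_AbsRing) (V:=R_NormedModule)). unfold Y; cbv beta. auto_derive. pos_sq_sum.
    + intros t _. unfold seg, Y, Cinv, Cmult, Cminus, Cplus, Copp, RtoC; simpl. unfold a. field.
      unfold a in Ha2. pos_sq_sum.
Qed.

Lemma atan_complementary u v : 0 < u -> 0 < v -> atan (u / v) + atan (v / u) = PI / 2.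
Proof.
  intros. replace (v / u) with (/ (u / v)) by (field; lra).
  rewrite atan_inv by (apply Rdiv_lt_0_compat; auto). ring.
Qed.

Lemma rect_winding x1 x2 y1 y2 px py : x1 < px < x2 -> y1 < py < y2 ->
  rect_int (fun w => / (w - (px, py)))%C x1 x2 y1 y2 = (0, 2 * PI).
Proof.
  intros Hx Hy. unfold rect_int.
  rewrite (seg_int_inv_horizontal x1 x2 y1), (seg_int_inv_vertical y1 y2 x2),
    (seg_int_inv_horizontal x2 x1 y2), (seg_int_inv_vertical y2 y1 x1) by lra.
  unfold Cplus; simpl. f_equal; [Req; field|].
  replace ((x2 - px) / (y1 - py)) with (- ((x2 - px) / (py - y1))) by (field; lra).
  replace ((x1 - px) / (y1 - py)) with ((px - x1) / (py - y1)) by (field; lra).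
  replace ((y1 - py) / (x2 - px)) with (- ((py - y1) / (x2 - px))) by (field; lra).
  replace ((x1 - px) / (y2 - py)) with (- ((px - x1) / (y2 - py))) by (field; lra).
  replace ((y1 - py) / (x1 - px)) with ((py - y1) / (px - x1)) by (field; lra).
  replace ((y2 - py) / (x1 - px)) with (- ((y2 - py) / (px - x1))) by (field; lra).
  rewrite !atan_opp.
  pose proof (atan_complementary (x2 - px) (py - y1) ltac:(lra) ltac:(lra)).
  pose proof (atan_complementary (px - x1) (py - y1) ltac:(lra) ltac:(lra)).
  pose proof (atan_complementary (y2 - py) (x2 - px) ltac:(lra) ltac:(lra)).
  pose proof (atan_complementary (px - x1) (y2 - py) ltac:(lra) ltac:(lra)).
  Req. lra.
Qed.

(** * From local power series to the Cauchy integral formula *)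

(** [f] agrees with a quadratic polynomial at [p] up to a cubic remainder.
    This is all that is used of analyticity. *)
Definition quad_approx (f : C -> C) (p : C) : Prop :=
  exists c1 c2 K r, 0 < r /\ 0 <= K /\ forall w, Cmod (w - p) < r ->
    Cmod (f w - f p - c1 * (w - p) - c2 * (w - p) * (w - p)) <= K * Cmod (w - p) ^ 3.

Lemma Cseries_cv_Cmod_le (u : nat -> C) (l T : C) M : Cseries_cv u l ->
  (forall N, (2 <= N)%nat -> Cmod (Csum u N - T) <= M) -> Cmod (l - T) <= M.
Proof.
  intros [H1 H2] HM. apply Rle_plus_epsilon. intros e He.
  destruct (H1 (e/2)) as [N1 HN1]; [lra|]. destruct (H2 (e/2)) as [N2 HN2]; [lra|].
  set (N := (N1 + N2 + 2)%nat).
  specialize (HN1 N ltac:(unfold N; lia)). specialize (HN2 N ltac:(unfold N; lia)).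
  specialize (HM N ltac:(unfold N; lia)). unfold R_dist in *.
  replace (l - T)%C with ((l - Csum u N) + (Csum u N - T))%C by ring.
  eapply Rle_trans; [apply Cmod_triangle|].
  assert (Cmod (l - Csum u N) <= e).
  { eapply Rle_trans; [apply Cmod_le_abs_sum|]. simpl.
    rewrite <- (Rabs_Ropp (fst l + - fst (Csum u N))), <- (Rabs_Ropp (snd l + - snd (Csum u N))).
    replace (- (fst l + - fst (Csum u N))) with (fst (Csum u N) - fst l) by ring.
    replace (- (snd l + - snd (Csum u N))) with (snd (Csum u N) - snd l) by ring. lra. }
  lra.
Qed.

(** The terms of a convergent series are bounded; applied at radius [rho]
    this is the crude Cauchy estimate [|c_n| rho^n <= B]. *)
Lemma Cseries_terms_bounded (u : nat -> C) l : Cseries_cv u l -> exists B, 0 <= B /\ forall n, Cmod (u n) <= B.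
Proof.
  intros [Hc1 Hc2].
  destruct (maj_by_pos _ (exist _ _ Hc1)) as [B1 [HB1 HB1']].
  destruct (maj_by_pos _ (exist _ _ Hc2)) as [B2 [HB2 HB2']].
  assert (HS : forall N, Cmod (Csum u N) <= B1 + B2).
  { intros N. eapply Rle_trans; [apply Cmod_le_abs_sum|]. specialize (HB1' N); specialize (HB2' N); lra. }
  exists (2 * (B1 + B2)). split; [lra|]. intros [|n].
  - pose proof (HS O). simpl in *. lra.
  - replace (u (S n)) with (Csum u (S n) - Csum u n)%C by (change (Csum u (S n)) with (Csum u n + u (S n))%C; ring).
    eapply Rle_trans; [apply Cmod_triangle|]. rewrite Cmod_opp. pose proof (HS (S n)); pose proof (HS n). lra.
Qed.

Lemma power_series_remainder (c : nat -> C) (z l : C) B rho : 0 < rho ->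
  (forall n, Cmod (c n) * rho ^ n <= B) -> Cmod z <= rho / 2 ->
  Cseries_cv (fun n => c n * z ^ n)%C l ->
  Cmod (l - (c 0%nat + c 1%nat * z + c 2%nat * z * z))%C <= 2 * B / rho ^ 3 * Cmod z ^ 3.
Proof.
  intros Hrho Hcb Hz Hl. set (m := Cmod z) in *. set (q := m / rho).
  assert (Hm : 0 <= m) by apply Cmod_ge_0.
  assert (HB : 0 <= B) by (specialize (Hcb O); pose proof (Cmod_ge_0 (c O)); simpl in Hcb; lra).
  assert (Hq : 0 <= q <= / 2).
  { unfold q. split; [apply Rdiv_le_0_compat; lra|]. apply Rmult_le_reg_l with rho; [lra|]. field_simplify; lra. }
  set (v := fun n => (c n * z ^ n)%C) in *.
  set (T := (c 0%nat + c 1%nat * z + c 2%nat * z * z)%C).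
  assert (Hv : forall n, Cmod (v n) <= B * q ^ n).
  { intros n. unfold v. rewrite Cmod_mult, Cmod_pow. fold m.
    replace (m ^ n) with (rho ^ n * q ^ n) by (rewrite <- Rpow_mult_distr; f_equal; unfold q; field; lra).
    rewrite <- Rmult_assoc. apply Rmult_le_compat_r; [apply pow_le; lra|apply Hcb]. }
  assert (Tail : forall k, Cmod (Csum v (k + 2) - T) <= 2 * B * q ^ 3 * (1 - (/2) ^ k)).
  { induction k as [|k IH].
    - change (Csum v (0 + 2)) with (v O + v 1%nat + v 2%nat)%C.
      replace (v O + v 1%nat + v 2%nat - T)%C with (RtoC 0) by (unfold v, T; simpl Cpow; ring).
      rewrite Cmod_0. simpl; lra.
    - replace (S k + 2)%nat with (S (k + 2)) by lia.
      change (Csum v (S (k + 2))) with (Csum v (k + 2) + v (S (k + 2)))%C.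
      replace (Csum v (k + 2) + v (S (k + 2)) - T)%C with ((Csum v (k + 2) - T) + v (S (k + 2)))%C by ring.
      eapply Rle_trans; [apply Cmod_triangle|]. eapply Rle_trans; [apply Rplus_le_compat; [apply IH|apply Hv]|].
      replace (S (k + 2)) with (k + 3)%nat by lia. rewrite pow_add.
      assert (q ^ k <= (/2) ^ k) by (apply pow_incr; lra).
      assert (0 <= q ^ 3) by (apply pow_le; lra).
      assert (B * q ^ 3 * q ^ k <= B * q ^ 3 * (/2) ^ k) by (apply Rmult_le_compat_l; [apply Rmult_le_pos|]; lra).
      replace ((/2) ^ (S k)) with (/2 * (/2) ^ k) by reflexivity. nra. }
  replace (2 * B / rho ^ 3 * m ^ 3) with (2 * B * q ^ 3) by (unfold q; field; lra).
  apply Cseries_cv_Cmod_le with (u := v); auto.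
  intros N HN. replace N with ((N - 2) + 2)%nat by lia. eapply Rle_trans; [apply Tail|].
  assert (0 < (/2) ^ (N - 2)) by (apply pow_lt; lra).
  assert (0 <= B * q ^ 3) by (apply Rmult_le_pos; [|apply pow_le]; lra). nra.
Qed.

Lemma power_series_quad_approx (f : C -> C) z0 r (c : nat -> C) : 0 < r ->
  (forall z, Cmod (z - z0) < r -> Cseries_cv (fun n => c n * (z - z0) ^ n)%C (f z)) ->
  quad_approx f z0.
Proof.
  intros Hr Hs. set (rho := r / 2). assert (Hrho : 0 < rho) by (unfold rho; lra).
  assert (Hrad : Cmod (z0 + RtoC rho - z0) = rho)
    by (replace (z0 + RtoC rho - z0)%C with (RtoC rho) by ring; rewrite Cmod_R, Rabs_pos_eq; lra).
  destruct (Cseries_terms_bounded _ _ (Hs (z0 + RtoC rho)%C ltac:(rewrite Hrad; unfold rho; lra))) as [B [HB Hb]].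
  assert (Hcb : forall n, Cmod (c n) * rho ^ n <= B)
    by (intros n; specialize (Hb n); rewrite Cmod_mult, Cmod_pow, Hrad in Hb; exact Hb).
  assert (Rem : forall w, Cmod (w - z0) < rho / 2 ->
    Cmod (f w - (c 0%nat + c 1%nat * (w - z0) + c 2%nat * (w - z0) * (w - z0)))%C <= 2 * B / rho ^ 3 * Cmod (w - z0) ^ 3)
    by (intros w Hw; apply power_series_remainder; auto; [lra|apply Hs; unfold rho in *; lra]).
  assert (Hf0 : f z0 = c 0%nat).
  { specialize (Rem z0). replace (z0 - z0)%C with (RtoC 0) in Rem by ring. rewrite Cmod_0 in Rem.
    specialize (Rem ltac:(lra)). rewrite pow_i in Rem by lia.
    apply Ceq_minus, Cmod_eq_0. pose proof (Cmod_ge_0 (f z0 - c 0%nat)).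
    replace (c 0%nat + c 1%nat * 0 + c 2%nat * 0 * 0)%C with (c 0%nat) in Rem by ring. lra. }
  exists (c 1%nat), (c 2%nat), (2 * B / rho ^ 3), (rho / 2). repeat split; [lra|apply Rdiv_le_0_compat; [lra|apply pow_lt; lra]|].
  intros w Hw. rewrite Hf0.
  replace (f w - c 0%nat - c 1%nat * (w - z0) - c 2%nat * (w - z0) * (w - z0))%C
    with (f w - (c 0%nat + c 1%nat * (w - z0) + c 2%nat * (w - z0) * (w - z0)))%C by ring.
  apply Rem; auto.
Qed.

Lemma Cdiff_at_of_remainder G p a r M : 0 < r -> 0 <= M ->
  (forall w, Cmod (w - p) < r -> Cmod (G w - G p - a * (w - p)) <= M * Cmod (w - p) ^ 2) ->
  Cdiff_at G p.
Proof.
  intros Hr HM Hb. exists r; split; auto.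
  exists (fun w => if Ceq_dec w p then a else ((G w - G p) / (w - p))%C). split.
  - intros e He. exists (Rmin r (e / (M + 1))). split; [apply Rmin_pos; auto; apply Rdiv_lt_0_compat; lra|].
    intros w Hw. destruct (Ceq_dec p p) as [_|n]; [|exfalso; auto].
    destruct (Ceq_dec w p) as [->|E]; [replace (a - a)%C with (RtoC 0) by ring; rewrite Cmod_0; auto|].
    assert (Hz : (w - p)%C <> RtoC 0) by (apply Cminus_eq_contra; auto).
    pose proof (Rlt_le_trans _ _ _ Hw (Rmin_l _ _)) as Hw1. pose proof (Rlt_le_trans _ _ _ Hw (Rmin_r _ _)) as Hw2.
    set (m := Cmod (w - p)) in *. assert (Hm : 0 < m) by (apply Cmod_gt_0; auto).
    replace ((G w - G p) / (w - p) - a)%C with ((G w - G p - a * (w - p)) / (w - p))%C by (field; auto).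
    rewrite Cmod_div by auto. fold m.
    apply Rle_lt_trans with (M * m ^ 2 / m); [apply Rmult_le_compat_r; [left; apply Rinv_0_lt_compat|apply Hb]; auto|].
    replace (M * m ^ 2 / m) with (M * m) by (field; lra).
    apply Rle_lt_trans with ((M + 1) * m); [nra|].
    apply Rmult_lt_reg_l with (/ (M + 1)); [apply Rinv_0_lt_compat; lra|].
    replace (/ (M + 1) * ((M + 1) * m)) with m by (field; lra). unfold Rdiv in Hw2. lra.
  - intros w Hw. destruct (Ceq_dec w p) as [->|E]; [ring|]. field. apply Cminus_eq_contra; auto.
Qed.

Lemma quad_approx_Cdiff f p : quad_approx f p -> Cdiff_at f p.
Proof.
  intros [c1 [c2 [K [r [Hr [HK Hb]]]]]].
  apply (Cdiff_at_of_remainder f p c1 r (K * r + Cmod c2)); auto.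
  { pose proof (Cmod_ge_0 c2). nra. }
  intros w Hw. set (z := (w - p)%C) in *. pose proof (Cmod_ge_0 z).
  replace (f w - f p - c1 * z)%C with ((f w - f p - c1 * z - c2 * z * z) + c2 * z * z)%C by ring.
  eapply Rle_trans; [apply Cmod_triangle|]. rewrite !Cmod_mult. specialize (Hb w Hw). fold z in Hb.
  assert (Hz3 : Cmod z ^ 3 <= r * Cmod z ^ 2) by (simpl; nra).
  assert (K * Cmod z ^ 3 <= K * r * Cmod z ^ 2) by (rewrite Rmult_assoc; apply Rmult_le_compat_l; auto).
  simpl in *. nra.
Qed.

Definition diff_quot (f : C -> C) (c1 p : C) (w : C) : C :=
  if Ceq_dec w p then c1 else ((f w - f p) / (w - p))%C.

Lemma diff_quot_Cdiff_at_center f p c1 c2 K r : 0 < r -> 0 <= K ->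
  (forall w, Cmod (w - p) < r ->
    Cmod (f w - f p - c1 * (w - p) - c2 * (w - p) * (w - p)) <= K * Cmod (w - p) ^ 3) ->
  Cdiff_at (diff_quot f c1 p) p.
Proof.
  intros Hr HK Hb. apply (Cdiff_at_of_remainder _ p c2 r K); auto.
  intros w Hw. unfold diff_quot. destruct (Ceq_dec p p) as [_|n]; [|exfalso; auto].
  destruct (Ceq_dec w p) as [->|E].
  { replace (c1 - c1 - c2 * (p - p))%C with (RtoC 0) by ring. rewrite Cmod_0.
    pose proof (Cmod_ge_0 (p - p)). apply Rmult_le_pos; auto. apply pow_le; auto. }
  assert (Hz : (w - p)%C <> RtoC 0) by (apply Cminus_eq_contra; auto).
  replace ((f w - f p) / (w - p) - c1 - c2 * (w - p))%C
    with ((f w - f p - c1 * (w - p) - c2 * (w - p) * (w - p)) / (w - p))%C by (field; auto).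
  rewrite Cmod_div by auto. specialize (Hb w Hw). pose proof (proj1 (Cmod_gt_0 _) Hz) as Hm.
  apply Rmult_le_reg_r with (Cmod (w - p)); auto.
  unfold Rdiv. rewrite Rmult_assoc, Rinv_l by lra. simpl in *. nra.
Qed.

Lemma diff_quot_Cdiff_at f c1 p z : Cdiff_at f z -> z <> p -> Cdiff_at (diff_quot f c1 p) z.
Proof.
  intros Hf E. assert (Hzp : 0 < Cmod (z - p)) by (apply Cmod_gt_0, Cminus_eq_contra; auto).
  apply Cdiff_at_local with (h := fun w => ((f w - f p) / (w - p))%C) (r := Cmod (z - p)); auto.
  - intros w Hw. unfold diff_quot. destruct (Ceq_dec w p) as [->|_]; auto.
    rewrite Cmod_sub_sym in Hw. lra.
  - apply Cdiff_at_div.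
    + apply Cdiff_at_minus; [auto|apply Cdiff_at_const].
    + apply Cdiff_at_minus; [apply Cdiff_at_id|apply Cdiff_at_const].
    + apply Cminus_eq_contra; auto.
Qed.

Definition two_pi_i : C := (0, 2 * PI).

Lemma two_pi_i_neq0 : two_pi_i <> RtoC 0.
Proof. intro E. injection E. pose proof PI_RGT_0. lra. Qed.

(** The Cauchy integral formula for a rectangle and an interior point [p]:
    the integral of the (differentiable) difference quotient vanishes by
    Goursat's theorem, and [f p / (w - p)] contributes [2 pi i f p]. *)
Theorem cauchy_formula f x1 x2 y1 y2 p : x1 < fst p < x2 -> y1 < snd p < y2 ->
  (forall z, in_rect x1 x2 y1 y2 z -> quad_approx f z) ->
  rect_int (fun w => f w / (w - p))%C x1 x2 y1 y2 = (two_pi_i * f p)%C.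
Proof.
  intros Hx Hy Hq.
  destruct (Hq p ltac:(unfold in_rect; lra)) as [c1 [c2 [K [r [Hr [HK Hb]]]]]].
  assert (Hne : forall z, on_bdry x1 x2 y1 y2 z -> (z - p)%C <> RtoC 0)
    by (intros z [_ Hz] E; apply Ceq_minus in E; subst z; lra).
  assert (Hdq : forall z, in_rect x1 x2 y1 y2 z -> Cdiff_at (diff_quot f c1 p) z).
  { intros z Hz. destruct (Ceq_dec z p) as [->|E].
    - exact (diff_quot_Cdiff_at_center f p c1 c2 K r Hr HK Hb).
    - apply diff_quot_Cdiff_at; auto. apply quad_approx_Cdiff; auto. }
  assert (Hinv : bdry_cont (fun w => / (w - p))%C x1 x2 y1 y2)
    by (intros z Hz; apply Ccont_at_inv; [apply Ccont_at_minus; [apply Ccont_at_id|apply Ccont_at_const]|auto]).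
  rewrite (rect_int_ext x1 x2 y1 y2 ltac:(lra) ltac:(lra) _ (fun w => f p * / (w - p) + diff_quot f c1 p w)%C).
  - rewrite rect_int_plus, rect_int_scal, (goursat (diff_quot f c1 p)); try lra; auto.
    + destruct p as [px py]. rewrite rect_winding by (simpl in *; lra). unfold two_pi_i. ring.
    + intros z Hz; apply Ccont_at_mult; [apply Ccont_at_const|auto].
    + intros z [Hz _]; apply Cdiff_at_cont; auto.
  - intros z Hz. unfold diff_quot. destruct (Ceq_dec z p) as [E|E].
    + exfalso. apply (Hne z Hz). rewrite E. ring.
    + field. apply Hne; auto.
Qed.

(** * Chebyshev polynomials

    Through the Joukowski map [J z = (z + 1/z)/2] it becomes
    [T_n (J z) = (z^n + z^-n)/2], which gives |T_n| <= 1 on [[-1,1]] (take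
    |z| = 1) and |T_n| >= c R^n outside the ellipse [J({|z| = R})]. *)

Fixpoint cheb (n : nat) (s : C) : C :=
  match n with
  | O => RtoC 1
  | S m => match m with O => s | S k => (RtoC 2 * s * cheb m s - cheb k s)%C end
  end.

Lemma cheb_rec n s : cheb (S (S n)) s = (RtoC 2 * s * cheb (S n) s - cheb n s)%C.
Proof. reflexivity. Qed.

Definition joukowski (z : C) : C := ((z + / z) / RtoC 2)%C.

Lemma RtoC2_neq0 : RtoC 2 <> RtoC 0.
Proof. intro E. injection E. lra. Qed.

Lemma cheb_joukowski n (z : C) : z <> RtoC 0 -> cheb n (joukowski z) = ((z ^ n + / z ^ n) / RtoC 2)%C.
Proof.
  intros Hz. unfold joukowski. pose proof RtoC2_neq0.
  cut (cheb n ((z + / z) / RtoC 2)%C = ((z ^ n + / z ^ n) / RtoC 2)%C /\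
       cheb (S n) ((z + / z) / RtoC 2)%C = ((z ^ (S n) + / z ^ (S n)) / RtoC 2)%C); [tauto|].
  induction n as [|m [IH1 IH2]]; [split; simpl; field; auto|].
  split; auto. rewrite cheb_rec, IH1, IH2. simpl.
  assert ((z ^ m)%C <> RtoC 0) by (apply Cpow_nz; auto).
  field. repeat split; auto.
Qed.

Lemma Cmod_joukowski_le (z : C) : z <> RtoC 0 -> Cmod (joukowski z) <= (Cmod z + / Cmod z) / 2.
Proof.
  intros Hz. unfold joukowski. rewrite Cmod_div by apply RtoC2_neq0. rewrite Cmod_R, Rabs_pos_eq by lra.
  pose proof (Cmod_triangle z (/ z)). rewrite Cmod_inv in H by auto. unfold Rdiv. nra.
Qed.

(** On [[-1,1]] Chebyshev polynomials are bounded by 1: there [s = J z] with [|z| = 1]. *)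
Lemma cheb_bound_interval n s : -1 <= s <= 1 -> Cmod (cheb n (RtoC s)) <= 1.
Proof.
  intros Hs. set (t := sqrt (1 - s * s)).
  assert (Ht : t * t = 1 - s * s) by (unfold t; apply sqrt_sqrt; nra).
  set (z := (s, t) : C).
  assert (Hmz : Cmod z = 1).
  { unfold Cmod, z; simpl. replace (s * (s * 1) + t * (t * 1)) with 1 by nra. apply sqrt_1. }
  assert (Hz : z <> RtoC 0) by (apply Cmod_gt_0; lra).
  assert (E : RtoC s = joukowski z).
  { unfold joukowski, z, Cinv, Cplus, Cdiv, Cmult, RtoC; simpl.
    replace (s * (s * 1) + t * (t * 1)) with 1 by nra. f_equal; field. }
  rewrite E, cheb_joukowski by auto. rewrite Cmod_div by apply RtoC2_neq0. rewrite Cmod_R, Rabs_pos_eq by lra.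
  pose proof (Cmod_triangle (z ^ n) (/ z ^ n)).
  rewrite Cmod_inv, Cmod_pow, Hmz, pow1 in H by (apply Cpow_nz; auto). lra.
Qed.

Lemma C_sqrt_exists (w : C) : exists s : C, (s * s)%C = w.
Proof.
  destruct w as [x y]. set (m := Cmod (x, y)).
  assert (Hx : Rabs x <= m) by apply (re_le_Cmod (x, y)).
  assert (Hmm : m * m = x * x + y * y) by (unfold m, Cmod; simpl; rewrite sqrt_sqrt; [ring|nra]).
  apply Rabs_le_between in Hx.
  set (a := sqrt ((m + x) / 2)). set (b := sqrt ((m - x) / 2)).
  assert (Ha : a * a = (m + x) / 2) by (unfold a; apply sqrt_sqrt; lra).
  assert (Hb : b * b = (m - x) / 2) by (unfold b; apply sqrt_sqrt; lra).
  assert (Ha0 : 0 <= a) by apply sqrt_pos. assert (Hb0 : 0 <= b) by apply sqrt_pos.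
  assert (Hab : (2 * a * b) * (2 * a * b) = y * y) by nra.
  destruct (Rle_dec 0 y) as [Hy|Hy].
  - exists (a, b). unfold Cmult; simpl. f_equal; [nra|].
    assert (2 * a * b = y) by (apply Rsqr_inj; unfold Rsqr; nra). nra.
  - exists (a, - b). unfold Cmult; simpl. f_equal; [nra|].
    assert (2 * a * b = - y) by (apply Rsqr_inj; unfold Rsqr; nra). nra.
Qed.

Lemma joukowski_preimage (s : C) : exists z : C, z <> RtoC 0 /\ 1 <= Cmod z /\ s = joukowski z.
Proof.
  destruct (C_sqrt_exists (s * s - 1)%C) as [q Hq].
  set (z1 := (s + q)%C). set (z2 := (s - q)%C).
  assert (H12 : (z1 * z2)%C = RtoC 1)
    by (unfold z1, z2; replace ((s + q) * (s - q))%C with (s * s - q * q)%C by ring; rewrite Hq; ring).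
  assert (Hz1 : z1 <> RtoC 0) by (intro E; rewrite E, Cmult_0_l in H12; injection H12; lra).
  assert (Hz2 : z2 <> RtoC 0) by (intro E; rewrite E, Cmult_0_r in H12; injection H12; lra).
  assert (Hi1 : (/ z1)%C = z2) by (replace z2 with (/ z1 * (z1 * z2))%C by (field; auto); rewrite H12; ring).
  assert (Hi2 : (/ z2)%C = z1) by (replace z1 with (/ z2 * (z1 * z2))%C by (field; auto); rewrite H12; ring).
  assert (Hm : Cmod z1 * Cmod z2 = 1) by (rewrite <- Cmod_mult, H12, Cmod_1; auto).
  pose proof RtoC2_neq0. unfold joukowski.
  destruct (Rle_dec 1 (Cmod z1)) as [Hge|Hlt].
  - exists z1. repeat split; auto. rewrite Hi1. unfold z1, z2. field; auto.
  - exists z2. repeat split; auto.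
    + pose proof (Cmod_ge_0 z1). pose proof (Cmod_ge_0 z2). nra.
    + rewrite Hi2. unfold z1, z2. field; auto.
Qed.

Lemma plus_inv_le_mono R' rho : 1 < R' -> 1 <= rho -> R' + / R' <= rho + / rho -> R' <= rho.
Proof.
  intros HR Hrho H. destruct (Rle_dec R' rho) as [h|h]; auto. exfalso.
  assert (E : (R' + / R') - (rho + / rho) = (R' - rho) * (1 - / (R' * rho))) by (field; lra).
  assert (/ (R' * rho) < 1) by (rewrite <- Rinv_1; apply Rinv_lt_contravar; nra).
  assert (0 < (R' - rho) * (1 - / (R' * rho))) by (apply Rmult_lt_0_compat; lra). lra.
Qed.

Lemma pow_sub_inv_lower R' rho n : 1 < R' -> R' <= rho -> (1 <= n)%nat ->
  rho ^ n * (1 - / (R' * R')) <= rho ^ n - / rho ^ n.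
Proof.
  intros HR Hrho Hn.
  assert (Hpn : rho ^ 1 <= rho ^ n) by (apply Rle_pow; [lra|lia]). rewrite pow_1 in Hpn.
  assert (Hp : 0 < rho ^ n) by (apply pow_lt; lra).
  assert (Hi : / (rho ^ n * rho ^ n) <= / (R' * R')) by (apply Rinv_le_contravar; nra).
  replace (/ rho ^ n) with (rho ^ n * / (rho ^ n * rho ^ n)) by (field; lra).
  pose proof (Rmult_le_compat_l _ _ _ (Rlt_le _ _ Hp) Hi). lra.
Qed.

Lemma cheb_lower_bound (s : C) (R' : R) n : 1 < R' -> (R' + / R') / 2 <= Cmod s ->
  (1 - / (R' * R')) / 2 * R' ^ n <= Cmod (cheb n s).
Proof.
  intros HR Hs. destruct (joukowski_preimage s) as [z [Hz [H1 ->]]].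
  set (rho := Cmod z) in *.
  assert (HrR : R' <= rho).
  { apply plus_inv_le_mono; auto. pose proof (Cmod_joukowski_le z Hz). fold rho in H. lra. }
  assert (HRR : 0 < 1 - / (R' * R')) by (assert (/ (R' * R') < 1) by (rewrite <- Rinv_1; apply Rinv_lt_contravar; nra); lra).
  destruct n as [|n].
  { simpl. rewrite Cmod_1. assert (0 < / (R' * R')) by (apply Rinv_0_lt_compat; nra). lra. }
  rewrite cheb_joukowski by auto. rewrite Cmod_div by apply RtoC2_neq0. rewrite Cmod_R, Rabs_pos_eq by lra.
  pose proof (Cmod_reverse_triangle (z ^ S n)%C (- / z ^ S n)%C) as T.
  rewrite Cmod_opp, Cmod_inv, Cmod_pow in T by (apply Cpow_nz; auto).
  replace (z ^ S n - - / z ^ S n)%C with (z ^ S n + / z ^ S n)%C in T by ring. fold rho in T.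
  pose proof (pow_sub_inv_lower R' rho (S n) HR HrR ltac:(lia)).
  assert (R' ^ S n <= rho ^ S n) by (apply pow_incr; lra).
  assert (0 <= R' ^ S n) by (apply pow_le; lra). unfold Rdiv. nra.
Qed.

(** * Polynomials in [x] whose coefficients depend continuously on [w]

    The divided difference [(T(w) - T(x)) / (w - x)] of a polynomial [T] is a
    polynomial in [x] with coefficients continuous in [w]; integrating it
    against a kernel in [w] yields a polynomial in [x]. *)

(** [Csum] (from the statement's definitions) has type [Cplx], which is [C];
    [ring] reads the carrier off the left-hand side, so [Cring] first moves
    everything to one side, of syntactic type [C]. *)
Ltac Cring := apply Ceq_minus; ring.

Lemma Csum_S (u : nat -> C) n : Csum u (S n) = (Csum u n + u (S n))%C.
Proof. reflexivity. Qed.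

Lemma Csum_ext_le (u v : nat -> C) n : (forall i, (i <= n)%nat -> u i = v i) -> Csum u n = Csum v n.
Proof. induction n as [|n IH]; intros H; [apply H; lia|]. rewrite !Csum_S, IH, H; auto. Qed.

Lemma Csum_plus (u v : nat -> C) n : Csum (fun i => u i + v i)%C n = (Csum u n + Csum v n)%C.
Proof. induction n as [|n IH]; [reflexivity|]. rewrite !Csum_S, IH. Cring. Qed.

Lemma Csum_scal c (u : nat -> C) n : Csum (fun i => c * u i)%C n = (c * Csum u n)%C.
Proof. induction n as [|n IH]; [reflexivity|]. rewrite !Csum_S, IH. Cring. Qed.

Lemma Csum_shift (u : nat -> C) n : Csum u (S n) = (u O + Csum (fun i => u (S i)) n)%C.
Proof. induction n as [|n IH]; [reflexivity|]. rewrite Csum_S, IH, !Csum_S. Cring. Qed.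

Definition poly_in_x (m : nat) (G : C -> C -> C) : Prop :=
  exists d : nat -> C -> C, (forall i w, Ccont_at (d i) w) /\
    forall w x, G w x = Csum (fun i => d i w * x ^ i)%C m.

Lemma poly_in_x_ext m G H : (forall w x, G w x = H w x) -> poly_in_x m G -> poly_in_x m H.
Proof. intros E [d [Hc Hd]]. exists d; split; auto. intros; rewrite <- E; auto. Qed.

Lemma poly_in_x_raise m m' G : (m <= m')%nat -> poly_in_x m G -> poly_in_x m' G.
Proof.
  induction 1 as [|m' _ IH]; auto. intros HG. destruct (IH HG) as [d [Hc Hd]].
  exists (fun i => if Nat.leb i m' then d i else (fun _ => RtoC 0)). split.
  - intros i w. destruct (Nat.leb i m'); [auto|apply Ccont_at_const].
  - intros w x. rewrite Hd, Csum_S, (proj2 (Nat.leb_gt (S m') m') ltac:(lia)).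
    rewrite (Csum_ext_le _ (fun i => (if Nat.leb i m' then d i else fun _ => RtoC 0) w * x ^ i)%C m').
    + Cring.
    + intros i Hi. rewrite (proj2 (Nat.leb_le i m') Hi). auto.
Qed.

Lemma poly_in_x_const (a : C -> C) : (forall w, Ccont_at a w) -> poly_in_x 0 (fun w x => a w).
Proof. intros H. exists (fun _ => a). split; auto. intros; simpl. Cring. Qed.

Lemma poly_in_x_plus m G H : poly_in_x m G -> poly_in_x m H -> poly_in_x m (fun w x => G w x + H w x)%C.
Proof.
  intros [d [Hc Hd]] [e [Hc' He]]. exists (fun i w => d i w + e i w)%C. split.
  - intros; apply Ccont_at_plus; auto.
  - intros. rewrite Hd, He, <- Csum_plus. apply Csum_ext_le; intros; Cring.
Qed.

Lemma poly_in_x_scal m (a : C -> C) G : (forall w, Ccont_at a w) -> poly_in_x m G ->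
  poly_in_x m (fun w x => a w * G w x)%C.
Proof.
  intros Ha [d [Hc Hd]]. exists (fun i w => a w * d i w)%C. split.
  - intros; apply Ccont_at_mult; auto.
  - intros. rewrite Hd, <- Csum_scal. apply Csum_ext_le; intros; Cring.
Qed.

Lemma poly_in_x_minus m G H : poly_in_x m G -> poly_in_x m H -> poly_in_x m (fun w x => G w x - H w x)%C.
Proof.
  intros. apply poly_in_x_ext with (fun w x => G w x + (fun _ => RtoC (-1)) w * H w x)%C.
  - intros; simpl; Cring.
  - apply poly_in_x_plus; auto. apply poly_in_x_scal; auto. intros; apply Ccont_at_const.
Qed.

Lemma poly_in_x_mult_x m G : poly_in_x m G -> poly_in_x (S m) (fun w x => x * G w x)%C.
Proof.
  intros [d [Hc Hd]]. exists (fun i => match i with O => (fun _ => RtoC 0) | S j => d j end). split.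
  - intros [|i] w; [apply Ccont_at_const|auto].
  - intros. rewrite Hd, Csum_shift, <- Csum_scal, Cmult_0_l, Cplus_0_l.
    apply Csum_ext_le; intros; simpl; Cring.
Qed.

Definition sq_map (lam mu : R) (w : C) : C := (RtoC lam * w * w + RtoC mu)%C.

Lemma Ccont_at_sq_map lam mu w : Ccont_at (sq_map lam mu) w.
Proof.
  unfold sq_map. apply Ccont_at_plus; [|apply Ccont_at_const].
  apply Ccont_at_mult; [apply Ccont_at_mult; [apply Ccont_at_const|]|]; apply Ccont_at_id.
Qed.

Lemma Ccont_at_cheb n g p : Ccont_at g p -> Ccont_at (fun w => cheb n (g w)) p.
Proof.
  intros Hg. cut (Ccont_at (fun w => cheb n (g w)) p /\ Ccont_at (fun w => cheb (S n) (g w)) p); [tauto|].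
  induction n as [|n [I1 I2]]; [split; [apply (Ccont_at_const (RtoC 1))|exact Hg]|].
  split; auto. apply Ccont_at_minus; auto. apply Ccont_at_mult; auto.
  apply Ccont_at_mult; [apply Ccont_at_const|auto].
Qed.

Lemma cheb_sq_map_poly lam mu n : poly_in_x (2 * n) (fun w x => cheb n (sq_map lam mu x)).
Proof.
  assert (Cst : forall c : C, forall w, Ccont_at (fun _ => c) w) by (intros; apply Ccont_at_const).
  cut (poly_in_x (2 * n) (fun w x => cheb n (sq_map lam mu x)) /\
       poly_in_x (2 * S n) (fun w x => cheb (S n) (sq_map lam mu x))); [tauto|].
  induction n as [|n [I1 I2]].
  - split.
    + exact (poly_in_x_const (fun _ => RtoC 1) (Cst _)).
    + apply poly_in_x_ext with (fun w x => (fun _ => RtoC mu) w + x * (x * (fun _ => RtoC lam) w))%C;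
        [intros; unfold sq_map; simpl; ring|].
      apply poly_in_x_plus; [apply (poly_in_x_raise 0); [lia|apply poly_in_x_const; auto]|].
      apply poly_in_x_mult_x, poly_in_x_mult_x, poly_in_x_const; auto.
  - split; auto.
    apply poly_in_x_ext with (fun w x => ((fun _ => RtoC (2 * mu)) w * cheb (S n) (sq_map lam mu x) +
        x * (x * ((fun _ => RtoC (2 * lam)) w * cheb (S n) (sq_map lam mu x)))) - cheb n (sq_map lam mu x))%C.
    { intros; rewrite cheb_rec; unfold sq_map. rewrite !RtoC_mult. Cring. }
    apply poly_in_x_minus; [apply poly_in_x_plus|].
    + apply (poly_in_x_raise (2 * S n)); [lia|]. apply poly_in_x_scal; auto.
    + replace (2 * S (S n))%nat with (S (S (2 * S n))) by lia.
      apply poly_in_x_mult_x, poly_in_x_mult_x, poly_in_x_scal; auto.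
    + apply (poly_in_x_raise (2 * n)); [lia|auto].
Qed.

(** The divided difference [(T_n(s(w)) - T_n(s(x))) / (w - x)] with [s = sq_map lam mu],
    defined by the recurrence of the Chebyshev polynomials. *)
Fixpoint cheb_diff (lam mu : R) (n : nat) (w x : C) : C :=
  match n with
  | O => RtoC 0
  | S m => match m with
           | O => (RtoC lam * (w + x))%C
           | S k => (RtoC 2 * sq_map lam mu w * cheb_diff lam mu m w x
                     + RtoC 2 * RtoC lam * (w + x) * cheb m (sq_map lam mu x) - cheb_diff lam mu k w x)%C
           end
  end.

Lemma cheb_diff_rec lam mu n w x : cheb_diff lam mu (S (S n)) w x =
  (RtoC 2 * sq_map lam mu w * cheb_diff lam mu (S n) w x
   + RtoC 2 * RtoC lam * (w + x) * cheb (S n) (sq_map lam mu x) - cheb_diff lam mu n w x)%C.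
Proof. reflexivity. Qed.

Lemma cheb_diff_eq lam mu n w x :
  ((w - x) * cheb_diff lam mu n w x)%C = (cheb n (sq_map lam mu w) - cheb n (sq_map lam mu x))%C.
Proof.
  cut (((w - x) * cheb_diff lam mu n w x)%C = (cheb n (sq_map lam mu w) - cheb n (sq_map lam mu x))%C /\
       ((w - x) * cheb_diff lam mu (S n) w x)%C = (cheb (S n) (sq_map lam mu w) - cheb (S n) (sq_map lam mu x))%C);
    [tauto|].
  induction n as [|n [I1 I2]]; [split; simpl; unfold sq_map; ring|].
  split; auto. rewrite !cheb_rec, cheb_diff_rec.
  transitivity (RtoC 2 * sq_map lam mu w * ((w - x) * cheb_diff lam mu (S n) w x)
    + RtoC 2 * RtoC lam * (w - x) * (w + x) * cheb (S n) (sq_map lam mu x) - (w - x) * cheb_diff lam mu n w x)%C.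
  - Cring.
  - rewrite I1, I2. unfold sq_map. Cring.
Qed.

Lemma cheb_diff_poly lam mu n : poly_in_x (2 * n - 1) (cheb_diff lam mu n).
Proof.
  assert (Cst : forall c : C, forall w, Ccont_at (fun _ => c) w) by (intros; apply Ccont_at_const).
  assert (Lin : forall c : C, forall w, Ccont_at (fun w => c * w)%C w)
    by (intros; apply Ccont_at_mult; [apply Ccont_at_const|apply Ccont_at_id]).
  cut (poly_in_x (2 * n - 1) (cheb_diff lam mu n) /\ poly_in_x (2 * S n - 1) (cheb_diff lam mu (S n))); [tauto|].
  induction n as [|n [I1 I2]].
  - split; [exact (poly_in_x_const (fun _ => RtoC 0) (Cst _))|].
    apply poly_in_x_ext with (fun w x => (fun w => RtoC lam * w) w + x * (fun _ => RtoC lam) w)%C;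
      [intros; simpl; ring|].
    apply poly_in_x_plus; [apply (poly_in_x_raise 0); [lia|apply poly_in_x_const; auto]|].
    apply poly_in_x_mult_x, poly_in_x_const; auto.
  - split; auto.
    apply poly_in_x_ext with (fun w x => ((fun w => RtoC 2 * sq_map lam mu w) w * cheb_diff lam mu (S n) w x
        + (fun w => RtoC 2 * RtoC lam * w) w * cheb (S n) (sq_map lam mu x)
        + x * ((fun _ => RtoC 2 * RtoC lam) w * cheb (S n) (sq_map lam mu x))) - cheb_diff lam mu n w x)%C;
      [intros; simpl; ring|].
    apply poly_in_x_minus; [apply poly_in_x_plus; [apply poly_in_x_plus|]|].
    + apply (poly_in_x_raise (2 * S n - 1)); [lia|]. apply poly_in_x_scal; auto.
      intros; apply Ccont_at_mult; [apply Ccont_at_const|apply Ccont_at_sq_map].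
    + apply (poly_in_x_raise (2 * S n)); [lia|]. apply poly_in_x_scal; [auto|apply cheb_sq_map_poly].
    + replace (2 * S (S n) - 1)%nat with (S (2 * S n)) by lia.
      apply poly_in_x_mult_x, poly_in_x_scal; [auto|apply cheb_sq_map_poly].
    + apply (poly_in_x_raise (2 * n - 1)); [lia|auto].
Qed.

Lemma Csum_poly_real (c : nat -> C) (x : R) m :
  fst (Csum (fun i => c i * RtoC x ^ i)%C m) = sum_f_R0 (fun i => fst (c i) * x ^ i) m.
Proof.
  induction m as [|m IH]; simpl; [ring|].
  rewrite IH, <- RtoC_pow. simpl. ring.
Qed.

(** * The contour and the Hermite-type error formula

    The map
    [s(w) = lam w^2 + mu = (2 w^2 - (a^2+b^2)) / (b^2-a^2)] sends
    [I = [-b,-a] u [a,b]] onto [[-1,1]], and [Q = T_n o s] is a polynomial of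
    degree [2n] with [|Q| <= 1] on [I].  The contour consists of the boundaries
    of the rectangles [[-X,-e] x [-X,X]] and [[e,X] x [-X,X]]; [e] is so small
    and [X] so large that [|s(w)| >= J(xi)] on it, hence [|Q(w)| >= kappa xi^n]
    there.  For [x] in [I], Cauchy's formula and
    [1/(w-x) = (Q(w)-Q(x))/((w-x)Q(w)) + Q(x)/((w-x)Q(w))]
    split [f(x)] into a polynomial of degree [2n-1] in [x] plus [Q(x)] times an
    integral of size [O(xi^-n)]. *)

Section Contour.
Variables a b xi : R.
Hypothesis Ha : 0 < a.
Hypothesis Hab : a < b.
Hypothesis Hxi1 : 1 < xi.
Hypothesis Hxi2 : xi < (b + a) / (b - a).

Definition in_I (x : R) : Prop := (-b <= x <= -a) \/ (a <= x <= b).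

Definition lam := 2 / (b * b - a * a).
Definition mu := - (a * a + b * b) / (b * b - a * a).
Definition Jxi := (xi + / xi) / 2.
Definition margin := a * a + b * b - Jxi * (b * b - a * a).
(** Abscissa of the inner edges, half-size of the rectangles, distance from the contour to [I]. *)
Definition inner := Rmin (a / 2) (Rmin 1 (margin / 2)).
Definition outer := b + a * a + b * b + 1.
Definition dist0 := Rmin (a / 2) 1.
Definition kappa := (1 - / (xi * xi)) / 2.

Lemma sq_pos : 0 < a * a < b * b.
Proof. split; nra. Qed.

(** [J] is increasing on [(1, +oo)], and [J((b+a)/(b-a)) = (a^2+b^2)/(b^2-a^2)]. *)
Lemma Jxi_lt : Jxi * (b * b - a * a) < a * a + b * b.
Proof.
  pose proof sq_pos. set (t0 := (b + a) / (b - a)).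
  assert (Ht0 : 1 < t0) by (unfold t0; apply Rmult_lt_reg_r with (b - a); [lra|]; field_simplify; lra).
  assert (E : (a * a + b * b) / (b * b - a * a) = (t0 + / t0) / 2).
  { unfold t0. field. repeat split; apply Rgt_not_eq || apply Rlt_not_eq; nra. }
  assert (Jxi < (t0 + / t0) / 2).
  { unfold Jxi. assert (/ (t0 * xi) < 1) by (rewrite <- Rinv_1; apply Rinv_lt_contravar; nra).
    assert ((t0 + / t0) - (xi + / xi) = (t0 - xi) * (1 - / (t0 * xi))) by (field; lra).
    assert (0 < (t0 - xi) * (1 - / (t0 * xi))) by (apply Rmult_lt_0_compat; unfold t0 in *; lra). lra. }
  rewrite <- E in H0. apply Rmult_lt_reg_r with (/ (b * b - a * a)); [apply Rinv_0_lt_compat; lra|].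
  rewrite Rmult_assoc, Rinv_r by lra. lra.
Qed.

Lemma Jxi_gt1 : 1 < Jxi.
Proof.
  unfold Jxi. assert ((xi + / xi) - 2 = (xi - 1) * (xi - 1) / xi) by (field; lra).
  assert (0 < (xi - 1) * (xi - 1) / xi) by (apply Rdiv_lt_0_compat; nra). lra.
Qed.

Lemma inner_prop : 0 < inner /\ inner <= a / 2 /\ inner <= 1 /\ 2 * (inner * inner) <= margin.
Proof.
  assert (0 < margin) by (pose proof Jxi_lt; unfold margin; lra). unfold inner.
  pose proof (Rmin_l (a/2) (Rmin 1 (margin/2))). pose proof (Rmin_r (a/2) (Rmin 1 (margin/2))).
  pose proof (Rmin_l 1 (margin/2)). pose proof (Rmin_r 1 (margin/2)).
  assert (0 < Rmin (a/2) (Rmin 1 (margin/2))) by (apply Rmin_pos; [lra|apply Rmin_pos; lra]).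
  repeat split; try lra. nra.
Qed.

Lemma outer_prop : b + 1 <= outer /\ 1 <= outer /\ a * a + b * b <= outer * outer.
Proof. pose proof sq_pos. unfold outer. repeat split; try lra. nra. Qed.

Lemma kappa_pos : 0 < kappa.
Proof. unfold kappa. assert (/ (xi * xi) < 1) by (rewrite <- Rinv_1; apply Rinv_lt_contravar; nra). lra. Qed.

Lemma dist0_pos : 0 < dist0.
Proof. unfold dist0. apply Rmin_pos; lra. Qed.

Lemma lam_mu_affine (t : R) : lam * t + mu = (2 * t - (a * a + b * b)) / (b * b - a * a).
Proof. pose proof sq_pos. unfold lam, mu. field. lra. Qed.

Lemma cheb_on_I_bound n x : in_I x -> Cmod (cheb n (sq_map lam mu (RtoC x))) <= 1.
Proof.
  intros Hx. pose proof sq_pos.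
  replace (sq_map lam mu (RtoC x)) with (RtoC (lam * (x * x) + mu)) by (apply C_proj_eq; unfold sq_map; simpl; ring).
  apply cheb_bound_interval. rewrite lam_mu_affine.
  assert (a * a <= x * x <= b * b) by (destruct Hx; split; nra).
  split; [apply Rmult_le_reg_r with (b * b - a * a)|apply Rmult_le_reg_r with (b * b - a * a)]; try lra;
    unfold Rdiv; rewrite Rmult_assoc, Rinv_l by lra; lra.
Qed.

Definition on_contour (w : C) : Prop :=
  on_bdry (- outer) (- inner) (- outer) outer w \/ on_bdry inner outer (- outer) outer w.

(** On the inner edges [Re w = +-e], [Re s(w) <= -J(xi)]. *)
Lemma sq_map_inner_edges u v : (u = inner \/ u = - inner) -> Jxi <= Cmod (sq_map lam mu (u, v)).
Proof.
  intros Hu. pose proof sq_pos. pose proof inner_prop as [_ [_ [_ Pe]]]. pose proof Jxi_gt1.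
  eapply Rle_trans; [|apply re_le_Cmod].
  replace (Re (sq_map lam mu (u, v))) with (lam * (inner * inner - v * v) + mu)
    by (unfold sq_map; simpl; destruct Hu; subst; ring).
  rewrite lam_mu_affine. unfold margin in Pe.
  assert (0 <= v * v) by nra. assert (0 < Jxi * (b * b - a * a)) by nra.
  rewrite Rabs_left.
  - apply Rmult_le_reg_r with (b * b - a * a); [lra|].
    unfold Rdiv. rewrite Ropp_mult_distr_l, Rmult_assoc, Rinv_l by lra. lra.
  - apply Rmult_lt_reg_r with (b * b - a * a); [lra|]. unfold Rdiv. rewrite Rmult_assoc, Rinv_l by lra. lra.
Qed.

(** Where [|w| >= X], [|s(w)| >= lam X^2 - |mu| >= J(xi)]. *)
Lemma sq_map_far (w : C) : outer <= Cmod w -> Jxi <= Cmod (sq_map lam mu w).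
Proof.
  intros Hw. pose proof sq_pos. pose proof Jxi_lt. pose proof outer_prop as [_ [X2 X3]].
  assert (Hlam : 0 < lam) by (unfold lam; apply Rdiv_lt_0_compat; lra).
  assert (Htri : Cmod (RtoC lam * w * w)%C <= Cmod (sq_map lam mu w) + Cmod (RtoC mu)).
  { replace (RtoC lam * w * w)%C with (sq_map lam mu w - RtoC mu)%C by (unfold sq_map; ring).
    eapply Rle_trans; [apply Cmod_triangle|]. rewrite Cmod_opp. lra. }
  rewrite !Cmod_mult, Cmod_R, Rabs_pos_eq, Cmod_R in Htri by lra.
  assert (Hmu : Rabs mu = (a * a + b * b) / (b * b - a * a)).
  { unfold mu. rewrite Rabs_left; [field; lra|]. unfold Rdiv.
    apply Rmult_lt_reg_r with (b * b - a * a); [lra|]. rewrite Rmult_assoc, Rinv_l by lra. lra. }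
  assert (Hww : a * a + b * b <= Cmod w * Cmod w) by nra.
  assert (lam * Cmod w * Cmod w >= 2 * ((a * a + b * b) / (b * b - a * a))).
  { unfold lam. replace (2 / (b * b - a * a) * Cmod w * Cmod w) with (2 * (Cmod w * Cmod w) / (b * b - a * a)) by (field; lra).
    apply Rle_ge. unfold Rdiv. rewrite Rmult_assoc. apply Rmult_le_compat_l; [lra|].
    apply Rmult_le_compat_r; [left; apply Rinv_0_lt_compat; lra|lra]. }
  assert (Jxi <= (a * a + b * b) / (b * b - a * a)).
  { apply Rmult_le_reg_r with (b * b - a * a); [lra|]. unfold Rdiv. rewrite Rmult_assoc, Rinv_l by lra. lra. }
  lra.
Qed.

Lemma sq_map_on_contour w : on_contour w -> Jxi <= Cmod (sq_map lam mu w).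
Proof.
  pose proof inner_prop as [Pe1 _]. pose proof outer_prop as [_ [X2 _]].
  assert (Far : forall w : C, Rabs (fst w) = outer \/ Rabs (snd w) = outer -> Jxi <= Cmod (sq_map lam mu w)).
  { intros z [E|E]; apply sq_map_far; rewrite <- E; [apply re_le_Cmod|apply Cmod_im_le]. }
  destruct w as [u v]. intros [[[Hu Hv] E]|[[Hu Hv] E]]; simpl in *;
    (destruct E as [E|[E|[E|E]]]; [| | apply Far; right; simpl; rewrite E, Rabs_left1 by lra; ring
                                     | apply Far; right; simpl; rewrite E, Rabs_pos_eq by lra; ring]).
  - apply Far; left; simpl. rewrite E, Rabs_left1 by lra. ring.
  - apply sq_map_inner_edges. auto.
  - apply sq_map_inner_edges. auto.
  - apply Far; left; simpl. rewrite E, Rabs_pos_eq by lra. ring.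
Qed.

Lemma contour_dist x w : in_I x -> on_contour w -> dist0 <= Cmod (w - RtoC x).
Proof.
  intros Hx Hw. pose proof inner_prop as [Pe1 [Pe2 [Pe3 _]]]. pose proof outer_prop as [X1 [X2 _]].
  assert (Hd1 : dist0 <= a / 2) by apply Rmin_l. assert (Hd2 : dist0 <= 1) by apply Rmin_r.
  assert (Re : Rabs (fst w - x) <= Cmod (w - RtoC x))
    by (replace (fst w - x) with (fst (w - RtoC x)%C) by (simpl; ring); apply re_le_Cmod).
  assert (Im : Rabs (snd w) <= Cmod (w - RtoC x))
    by (replace (snd w) with (snd (w - RtoC x)%C) by (simpl; ring); apply Cmod_im_le).
  destruct w as [u v]; simpl in Re, Im.
  destruct Hw as [[[Hu Hv] E]|[[Hu Hv] E]]; simpl in *; destruct Hx as [Hx|Hx];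
    first [ destruct E as [E|[E|[E|E]]]; subst
          | idtac ];
    first [ eapply Rle_trans; [|apply Re]; first [rewrite Rabs_left by lra|rewrite Rabs_right by lra]; lra
          | eapply Rle_trans; [|apply Im]; first [rewrite Rabs_left by lra|rewrite Rabs_right by lra]; lra ].
Qed.

Lemma cheb_on_contour_lower n w : on_contour w -> kappa * xi ^ n <= Cmod (cheb n (sq_map lam mu w)).
Proof. intros Hw. apply cheb_lower_bound; auto. apply sq_map_on_contour; auto. Qed.

Lemma cheb_on_contour_neq0 n w : on_contour w -> cheb n (sq_map lam mu w) <> RtoC 0.
Proof.
  intros Hw E. pose proof (cheb_on_contour_lower n w Hw). rewrite E, Cmod_0 in H.
  pose proof kappa_pos. assert (0 < xi ^ n) by (apply pow_lt; lra). nra.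
Qed.

Lemma contour_sub_neq0 x w : in_I x -> on_contour w -> (w - RtoC x)%C <> RtoC 0.
Proof. intros Hx Hw E. pose proof (contour_dist x w Hx Hw). rewrite E, Cmod_0 in H. pose proof dist0_pos. lra. Qed.

Lemma contour_hermite (F : C -> C) x1 x2 y1 y2 n k (d : nat -> C -> C) M x :
  x1 < x2 -> y1 < y2 -> in_I x -> (forall w, on_bdry x1 x2 y1 y2 w -> on_contour w) ->
  bdry_cont F x1 x2 y1 y2 -> (forall w, on_bdry x1 x2 y1 y2 w -> Cmod (F w) <= M) ->
  (forall i w, Ccont_at (d i) w) -> (forall w z, cheb_diff lam mu n w z = Csum (fun i => d i w * z ^ i)%C k) ->
  exists E, rect_int (fun w => F w / (w - RtoC x))%C x1 x2 y1 y2 =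
    (Csum (fun i => rect_int (fun w => F w * d i w / cheb n (sq_map lam mu w))%C x1 x2 y1 y2 * RtoC x ^ i)%C k
     + cheb n (sq_map lam mu (RtoC x)) * E)%C /\
    Cmod E <= 2 * ((x2 - x1) + (y2 - y1)) * (M / (kappa * xi ^ n * dist0)).
Proof.
  intros Hx Hy HJ HG HF HM Hdc HD.
  set (Q := fun w => cheb n (sq_map lam mu w)).
  assert (HQ : forall w, on_bdry x1 x2 y1 y2 w -> Q w <> RtoC 0) by (intros; apply cheb_on_contour_neq0; auto).
  assert (HW : forall w, on_bdry x1 x2 y1 y2 w -> (w - RtoC x)%C <> RtoC 0) by (intros; apply contour_sub_neq0; auto).
  assert (CQ : forall w, Ccont_at Q w) by (intros; apply Ccont_at_cheb, Ccont_at_sq_map).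
  assert (Cx : forall w, Ccont_at (fun w => w - RtoC x)%C w) by (intros; apply Ccont_at_minus; [apply Ccont_at_id|apply Ccont_at_const]).
  assert (Crem : bdry_cont (fun w => F w / (Q w * (w - RtoC x)))%C x1 x2 y1 y2)
    by (intros w Hw; apply Ccont_at_mult; [apply HF; auto|apply Ccont_at_inv; [apply Ccont_at_mult; auto|apply Cmult_neq_0; auto]]).
  assert (Cpol : forall i, bdry_cont (fun w => F w * d i w / Q w)%C x1 x2 y1 y2)
    by (intros i w Hw; apply Ccont_at_mult; [apply Ccont_at_mult; [apply HF; auto|auto]|apply Ccont_at_inv; auto]).
  exists (rect_int (fun w => F w / (Q w * (w - RtoC x)))%C x1 x2 y1 y2). split.
  - rewrite <- rect_int_sum, <- rect_int_scal, <- rect_int_plus; try lra; auto.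
    + apply rect_int_ext; try lra. intros w Hw.
      rewrite (Csum_ext_le _ (fun i => (F w / Q w) * (d i w * RtoC x ^ i))%C) by (intros; unfold Q, Cdiv; ring).
      rewrite Csum_scal, <- HD.
      replace (cheb_diff lam mu n w (RtoC x)) with ((Q w - Q (RtoC x)) / (w - RtoC x))%C
        by (unfold Q; rewrite <- cheb_diff_eq; field; apply HW; auto).
      unfold Q in *. field. split; [apply HW|apply HQ]; auto.
    + intros w Hw. apply Ccont_at_Csum. intros i. apply Ccont_at_mult; [apply Cpol; auto|apply Ccont_at_const].
    + intros w Hw. apply Ccont_at_mult; [apply Ccont_at_const|apply Crem; auto].
  - pose proof kappa_pos. pose proof dist0_pos. assert (0 < xi ^ n) by (apply pow_lt; lra).
    apply rect_int_ML; try lra; auto. intros w Hw.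
    rewrite Cmod_div, Cmod_mult by (apply Cmult_neq_0; auto).
    pose proof (cheb_on_contour_lower n w (HG w Hw)) as LQ. pose proof (contour_dist x w HJ (HG w Hw)).
    pose proof (HM w Hw). pose proof (Cmod_ge_0 (F w)). fold (Q w) in LQ.
    unfold Rdiv. apply Rmult_le_compat; auto; [left; apply Rinv_0_lt_compat, Rmult_lt_0_compat; nra|].
    apply Rinv_le_contravar; [apply Rmult_lt_0_compat; [apply Rmult_lt_0_compat|]; auto|].
    apply Rmult_le_compat; nra.
Qed.

Variables (f : R -> R) (f1 f2 : C -> C).
Hypothesis Hq1 : forall z, fst z < 0 -> quad_approx f1 z.
Hypothesis Hq2 : forall z, 0 < fst z -> quad_approx f2 z.
Hypothesis Hf1 : forall x, -b <= x <= -a -> f1 (RtoC x) = RtoC (f x).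
Hypothesis Hf2 : forall x, a <= x <= b -> f2 (RtoC x) = RtoC (f x).

Lemma contour_rects : - outer < - inner /\ inner < outer /\ - outer < outer.
Proof. pose proof inner_prop as [Pe1 [Pe2 _]]. pose proof outer_prop as [X1 [X2 _]]. repeat split; lra. Qed.

Lemma bdry_cont_f1 : bdry_cont f1 (- outer) (- inner) (- outer) outer.
Proof. pose proof inner_prop as [Pe1 _]. intros z [[Hz _] _]. apply Cdiff_at_cont, quad_approx_Cdiff, Hq1. lra. Qed.

Lemma bdry_cont_f2 : bdry_cont f2 inner outer (- outer) outer.
Proof. pose proof inner_prop as [Pe1 _]. intros z [[Hz _] _]. apply Cdiff_at_cont, quad_approx_Cdiff, Hq2. lra. Qed.

(** Cauchy's formula on the contour: for [x] in [[-b,-a]] the left rectangle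
    surrounds [x] and the right integrand is holomorphic (Goursat), and
    symmetrically for [x] in [[a,b]]. *)
Lemma contour_cauchy x : in_I x ->
  (rect_int (fun w => f1 w / (w - RtoC x))%C (- outer) (- inner) (- outer) outer +
   rect_int (fun w => f2 w / (w - RtoC x))%C inner outer (- outer) outer)%C = (two_pi_i * RtoC (f x))%C.
Proof.
  intros Hx. pose proof inner_prop as [Pe1 [Pe2 _]]. pose proof outer_prop as [X1 [X2 _]].
  assert (Hdq : forall g z, Cdiff_at g z -> fst z <> x -> Cdiff_at (fun w => g w / (w - RtoC x))%C z).
  { intros g z Hg Hz. apply Cdiff_at_div; auto.
    - apply Cdiff_at_minus; [apply Cdiff_at_id|apply Cdiff_at_const].
    - intro E. apply Hz. apply (f_equal fst) in E. simpl in E. lra. }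
  destruct Hx as [Hx|Hx].
  - rewrite (goursat (fun w => f2 w / (w - RtoC x))%C), cauchy_formula; simpl; try lra.
    + rewrite Hf1 by lra. ring.
    + intros z [Hz _]. apply Hq1. lra.
    + intros z [Hz _]. apply Hdq; [apply quad_approx_Cdiff, Hq2|]; lra.
  - rewrite (goursat (fun w => f1 w / (w - RtoC x))%C), cauchy_formula; simpl; try lra.
    + rewrite Hf2 by lra. ring.
    + intros z [Hz _]. apply Hq2. lra.
    + intros z [Hz _]. apply Hdq; [apply quad_approx_Cdiff, Hq1|]; lra.
Qed.

Definition hermite_coef (n : nat) (d : nat -> C -> C) (i : nat) : C :=
  ((rect_int (fun w => f1 w * d i w / cheb n (sq_map lam mu w))%C (- outer) (- inner) (- outer) outer +
    rect_int (fun w => f2 w * d i w / cheb n (sq_map lam mu w))%C inner outer (- outer) outer) / two_pi_i)%C.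

Definition err_const (M1 M2 : R) : R :=
  (2 * ((- inner + outer) + (outer + outer)) * M1 + 2 * ((outer - inner) + (outer + outer)) * M2)
  / (kappa * dist0) / (2 * PI).

(** The error of the Hermite-type polynomial is at most [err_const / xi^n] on [I]:
    [f(x) - p(x) = Q(x) (E1 + E2) / (2 pi i)] with [|Q(x)| <= 1]. *)
Lemma hermite_error_bound M1 M2 n k (d : nat -> C -> C) :
  (forall z, on_bdry (- outer) (- inner) (- outer) outer z -> Cmod (f1 z) <= M1) ->
  (forall z, on_bdry inner outer (- outer) outer z -> Cmod (f2 z) <= M2) ->
  (forall i w, Ccont_at (d i) w) -> (forall w z, cheb_diff lam mu n w z = Csum (fun i => d i w * z ^ i)%C k) ->
  forall x, in_I x ->
  Cmod (RtoC (f x) - Csum (fun i => hermite_coef n d i * RtoC x ^ i)%C k) <= err_const M1 M2 / xi ^ n.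
Proof.
  intros HM1 HM2 Hdc HD x Hx. pose proof contour_rects as [R1 [R2 R3]].
  destruct (contour_hermite f1 _ _ _ _ n k d M1 x R1 R3 Hx (fun w Hw => or_introl Hw) bdry_cont_f1 HM1 Hdc HD)
    as [E1 [Eq1 B1]].
  destruct (contour_hermite f2 _ _ _ _ n k d M2 x R2 R3 Hx (fun w Hw => or_intror Hw) bdry_cont_f2 HM2 Hdc HD)
    as [E2 [Eq2 B2]].
  pose proof (contour_cauchy x Hx) as Hc. rewrite Eq1, Eq2 in Hc.
  set (P1 := Csum _ k) in Hc. set (P2 := Csum _ k) in Hc.
  set (Qx := cheb n (sq_map lam mu (RtoC x))) in *. pose proof two_pi_i_neq0 as T0.
  assert (HP : Csum (fun i => hermite_coef n d i * RtoC x ^ i)%C k = (/ two_pi_i * (P1 + P2))%C).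
  { unfold P1, P2. rewrite <- Csum_plus, <- Csum_scal. apply Csum_ext_le. intros i _.
    unfold hermite_coef, Cdiv. ring. }
  assert (Hdiff : (RtoC (f x) - Csum (fun i => hermite_coef n d i * RtoC x ^ i)%C k)%C = (Qx * (E1 + E2) / two_pi_i)%C).
  { replace (RtoC (f x)) with ((two_pi_i * RtoC (f x)) / two_pi_i)%C by (field; auto).
    rewrite <- Hc, HP. field. auto. }
  rewrite Hdiff, Cmod_div, Cmod_mult by auto.
  assert (Hpi : Cmod two_pi_i = 2 * PI).
  { unfold two_pi_i, Cmod; simpl. pose proof PI_RGT_0.
    replace (0 * (0 * 1) + 2 * PI * (2 * PI * 1)) with ((2 * PI) * (2 * PI)) by ring. apply sqrt_square. lra. }
  rewrite Hpi. pose proof PI_RGT_0. pose proof kappa_pos. pose proof dist0_pos.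
  assert (Hxn : 0 < xi ^ n) by (apply pow_lt; lra).
  pose proof (cheb_on_I_bound n x Hx) as HQ. fold Qx in HQ.
  pose proof (Cmod_triangle E1 E2). pose proof (Cmod_ge_0 Qx). pose proof (Cmod_ge_0 (E1 + E2)).
  apply Rle_trans with ((Cmod E1 + Cmod E2) / (2 * PI)).
  - unfold Rdiv. apply Rmult_le_compat_r; [left; apply Rinv_0_lt_compat; lra|]. nra.
  - apply Rle_trans with ((2 * ((- inner + outer) + (outer + outer)) * (M1 / (kappa * xi ^ n * dist0)) +
                            2 * ((outer - inner) + (outer + outer)) * (M2 / (kappa * xi ^ n * dist0))) / (2 * PI)).
    + unfold Rdiv at 1 3. apply Rmult_le_compat_r; [left; apply Rinv_0_lt_compat; lra|].
      replace (- inner - - outer) with (- inner + outer) in B1 by ring.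
      replace (outer - - outer) with (outer + outer) in B1, B2 by ring. lra.
    + right. unfold err_const. field. repeat split; lra.
Qed.

(** For every degree [k] there is a real polynomial of degree [<= k] within
    [Cst * xi^-n] of [f] on [I], where [n = (k+1)/2], so that [2n - 1 <= k]:
    take the real parts of the coefficients of the Hermite-type polynomial. *)
Theorem chebyshev_approx : exists Cst, 0 < Cst /\ forall k, exists c : nat -> R,
  forall x, in_I x -> Rabs (f x - poly_eval c k x) <= Cst * / xi ^ ((k + 1) / 2).
Proof.
  pose proof contour_rects as [R1 [R2 R3]].
  destruct (bdry_cont_bounded (- outer) (- inner) (- outer) outer ltac:(lra) ltac:(lra) f1 R1 R3 bdry_cont_f1) as [M1 [HM1 BM1]].
  destruct (bdry_cont_bounded inner outer (- outer) outer ltac:(lra) ltac:(lra) f2 R2 R3 bdry_cont_f2) as [M2 [HM2 BM2]].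
  assert (HK : 0 <= err_const M1 M2).
  { pose proof kappa_pos. pose proof dist0_pos. pose proof PI_RGT_0. unfold err_const.
    apply Rdiv_le_0_compat; [|lra]. apply Rdiv_le_0_compat; [|apply Rmult_lt_0_compat; auto].
    apply Rplus_le_le_0_compat; apply Rmult_le_pos; lra. }
  exists (err_const M1 M2 + 1). split; [lra|]. intros k. set (n := ((k + 1) / 2)%nat).
  assert (Hn : (2 * n - 1 <= k)%nat).
  { unfold n. pose proof (Nat.div_mod (k + 1) 2 ltac:(lia)). pose proof (Nat.mod_upper_bound (k + 1) 2 ltac:(lia)). lia. }
  destruct (poly_in_x_raise _ _ _ Hn (cheb_diff_poly lam mu n)) as [d [Hdc HD]].
  exists (fun i => fst (hermite_coef n d i)). intros x Hx.
  pose proof (hermite_error_bound M1 M2 n k d BM1 BM2 Hdc HD x Hx) as B.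
  unfold poly_eval. rewrite <- Csum_poly_real.
  replace (f x - fst (Csum _ k)) with (fst (RtoC (f x) - Csum (fun i => hermite_coef n d i * RtoC x ^ i) k)%C)
    by (simpl; ring).
  eapply Rle_trans; [apply re_le_Cmod|]. eapply Rle_trans; [apply B|].
  assert (0 < / xi ^ n) by (apply Rinv_0_lt_compat, pow_lt; lra). unfold Rdiv. nra.
Qed.

End Contour.

Lemma analytic_quad_approx (U : Cplx -> Prop) g : analytic_on U g -> forall z, U z -> quad_approx g z.
Proof.
  intros H z Hz. destruct (H z Hz) as [r [Hr [c Hc]]]. apply (power_series_quad_approx g z r c Hr).
  intros w Hw. assert (Hw' : Defs.Cmod (Csub w z) < r) by (unfold Defs.Cmod, Cmod in *; simpl in *; rewrite !Rmult_1_r in Hw; exact Hw).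
  exact (Hc w Hw').
Qed.

Lemma Ek_le_of_uniform_bound (f : R -> R) (J : R -> Prop) k M (c : nat -> R) x0 :
  J x0 -> (forall x, J x -> Rabs (f x - poly_eval c k x) <= M) -> Ek_le f J k M.
Proof.
  intros Hx0 Hc eps Heps. exists c.
  set (S := fun e => exists x, J x /\ e = Rabs (f x - poly_eval c k x)).
  assert (Hb : bound S) by (exists M; intros e [x [Hx ->]]; auto).
  destruct (completeness S Hb (ex_intro _ _ (ex_intro _ x0 (conj Hx0 eq_refl)))) as [s Hs].
  exists s. split; [exact Hs|].
  assert (s <= M) by (apply Hs; intros e [x [Hx ->]]; auto). lra.
Qed.

(** [xi^-((k+1)/2) <= xi^(-k/2)], as [2 ((k+1)/2) >= k]. *)
Lemma inv_pow_half_le (xi : R) k : 1 < xi -> / xi ^ ((k + 1) / 2) <= Rpower xi (- INR k / 2).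
Proof.
  intros Hxi. set (n := ((k + 1) / 2)%nat).
  rewrite <- Rpower_pow, <- Rpower_Ropp by lra. apply Rle_Rpower; [lra|].
  assert (Hn : (k <= 2 * n)%nat)
    by (unfold n; pose proof (Nat.div_mod (k + 1) 2 ltac:(lia)); pose proof (Nat.mod_upper_bound (k + 1) 2 ltac:(lia)); lia).
  apply le_INR in Hn. rewrite mult_INR in Hn. simpl in Hn. lra.
Qed.

(** Coquelicot also defines [continuous_on], [Cmod] and [RtoC]; the statement
    refers to the definitions of [Defs], which we therefore bring back in scope. *)
Import Defs.

Theorem theorem8p10 (a b : R) (f : R -> R) (f1 f2 : Cplx -> Cplx) :
  0 < a -> a < b ->
  continuous_on f (fun x => (-b <= x <= -a) \/ (a <= x <= b)) ->
  analytic_on (fun z => Cre z < 0) f1 ->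
  analytic_on (fun z => 0 < Cre z) f2 ->
  (forall x, -b <= x <= -a -> f1 (RtoC x) = RtoC (f x)) ->
  (forall x, a <= x <= b -> f2 (RtoC x) = RtoC (f x)) ->
  forall xi : R, 1 < xi -> xi < (b + a) / (b - a) ->
  exists C0 : R, 0 < C0 /\
    forall k : nat,
      Ek_le f (fun x => (-b <= x <= -a) \/ (a <= x <= b)) k
        (C0 * Rpower xi (- (INR k) / 2)).
Proof.
  intros Ha Hab _ Han1 Han2 Hf1 Hf2 xi Hxi1 Hxi2.
  destruct (chebyshev_approx a b xi Ha Hab Hxi1 Hxi2 f f1 f2 (analytic_quad_approx _ _ Han1)
              (analytic_quad_approx _ _ Han2) Hf1 Hf2) as [Cst [HC Happ]].
  exists Cst. split; auto. intros k. destruct (Happ k) as [c Hc].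
  apply (Ek_le_of_uniform_bound f _ k _ c a); [right; lra|].
  intros x Hx. eapply Rle_trans; [apply Hc, Hx|].
  apply Rmult_le_compat_l; [lra|apply inv_pow_half_le; auto].
Qed.
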